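(* Let $N\ge3$, $\mu\ge0$, assume (K0) and (F0), and let $p>p_S(\alpha)$. For every $\sigma>0$ there is $\zeta_\sigma>0$ such that $r_0(\zeta)\ge\sigma\zeta^{-1/\theta}$ for all $\zeta>\zeta_\sigma$. Furthermore, for every $\sigma>0$, $$\lim_{\zeta\to\infty}\zeta^{-1}\big|u(\sigma\zeta^{-1/\theta},\zeta)-\bar u(\sigma\zeta^{-1/\theta},\zeta)\big|=0,\qquad \lim_{\zeta\to\infty}\zeta^{-1-1/\theta}\big|u_r(\sigma\zeta^{-1/\theta},\zeta)-\bar u_r(\sigma\zeta^{-1/\theta},\zeta)\big|=0.$$
   Context: (K0): $K:(0,\infty)\to(0,\infty)$ is continuous and $K(r)=(k_0+o(1))r^{\alpha}$ as $r\to0$ for some $\alpha>-2$, $k_0>0$. (F0): $f:(0,\infty)\to[0,\infty)$ is continuous, not identically zero, and $f(r)=O(r^{\nu})$ as $r\to0$ for some $\nu>-2$. $p_S(\alpha)=\frac{N+2+2\alpha}{N-2}$, $\theta:=\frac{2+\alpha}{p-1}$. For $\zeta>0$, $u(\cdot,\zeta)$ denotes the (unique) regular solution of $u''+\frac{N-1}{r}u'+K(r)\max\{u,0\}^p+\mu f(r)=0$ with $u(0)=\zeta$, i.e. the continuous solution on $[0,\infty)$ of $u(r)=\zeta-\int_0^r\frac{s^{2-N}-r^{2-N}}{N-2}s^{N-1}\big(K(s)\max\{u(s),0\}^p+\mu f(s)\big)ds$; $r_0(\zeta)\in(0,\infty]$ is its first zero ($r_0(\zeta)=\infty$ if $u(\cdot,\zeta)>0$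 on $(0,\infty)$). $\bar u(\cdot,\zeta)$ denotes the solution of $\bar u''+\frac{N-1}{r}\bar u'+k_0r^{\alpha}\bar u^p=0$ for $r>0$, $\bar u(0)=\zeta$ (regular at $0$), which is positive on $(0,\infty)$ and satisfies $\bar u(r,\zeta)=\zeta\bar u(\zeta^{1/\theta}r,1)$. *)

From Stdlib Require Import Reals.
From Coquelicot Require Import Coquelicot.
Open Scope R_scope.

Definition powp (x a : R) : R := if Rlt_dec 0 x then Rpower x a else 0.

Definition pS (N : nat) (alpha : R) : R := (INR N + 2 + 2 * alpha) / (INR N - 2).

Definition theta (alpha p : R) : R := (2 + alpha) / (p - 1).

(* v is the regular solution with v(0) = zeta of
     v'' + (N-1)/r v' + Kf(r) max{v,0}^p + mu f(r) = 0,
   i.e. v is continuous on [0,oo) and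
     v(r) = zeta - int_0^r (s^{2-N} - r^{2-N})/(N-2) s^{N-1}
                       (Kf(s) max{v(s),0}^p + mu f(s)) ds   (r > 0),
   the integral being the (improper at 0) integral over (0,r]. *)
Definition regular_solution (N : nat) (p mu : R) (Kf f : R -> R)
    (zeta : R) (v : R -> R) : Prop :=
  v 0 = zeta /\
  filterlim v (at_right 0) (locally zeta) /\
  (forall r, 0 < r -> continuous v r) /\
  (forall r, 0 < r ->
     is_RInt_gen
       (fun s => (Rpower s (2 - INR N) - Rpower r (2 - INR N)) / (INR N - 2)
                 * Rpower s (INR N - 1)
                 * (Kf s * powp (Rmax (v s) 0) p + mu * f s))
       (at_right 0) (at_point r) (zeta - v r)).

(* First zero r_0 of g on (0,oo); +oo if there is none. *)
Definition first_zero (g : R -> R) : Rbar :=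
  Glb_Rbar (fun r => 0 < r /\ g r = 0).

(** For large [zeta] the solutions are compared on the ball of radius [R = sigma zeta^(-1/theta)].
    There [K r = (k0 + o(1)) r^alpha] and [mu f = O(r^nu)], so the sources of the two integral
    equations differ by [o(zeta)] up to a term Lipschitz in [u - ubar], with constant
    [k0 p zeta^(p-1)]; since [zeta^(p-1) R^(2+alpha) = sigma^(2+alpha)], a Gronwall argument with
    weight [exp (c r^(2+alpha))] gives [|u - ubar| = o(zeta)] on [(0, R]], and the flux identity
    [r^(N-1) u' = - int_0^r s^(N-1) (K u^p + mu f)] then gives [|u' - ubar'| = o(zeta / R)].
    For the first zero: [ubar(r, zeta) = zeta ubar(zeta^(1/theta) r, 1)] by scaling and uniqueness,
    [ubar(., 1)] is nonincreasing, and it is positive for [p > p_S(alpha)] because the Pohozaev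
    function tends to [0] at [0], is strictly decreasing while [ubar > 0] and nonincreasing
    afterwards, but would be [>= 0] wherever [ubar <= 0]; hence
    [u(., zeta) >= zeta ubar(sigma, 1) / 2 > 0] on [(0, R]]. *)

From Stdlib Require Import Reals Lra.
From Coquelicot Require Import Coquelicot.
Open Scope R_scope.

Lemma Rpower_pos (x a : R) : 0 < Rpower x a.
Proof. apply exp_pos. Qed.

Lemma Rpower_base_1 (a : R) : Rpower 1 a = 1.
Proof. unfold Rpower. rewrite ln_1, Rmult_0_r. apply exp_0. Qed.

Lemma Rpower_plus_1 (x a : R) : 0 < x -> x * Rpower x a = Rpower x (1 + a).
Proof. intros. rewrite Rpower_plus, Rpower_1 by assumption. reflexivity. Qed.

Lemma Rpower_mul_1_minus (x a : R) : 0 < x -> Rpower x a * Rpower x (1 - a) = x.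
Proof.
  intros. rewrite <- Rpower_plus. replace (a + (1 - a)) with 1 by ring.
  apply Rpower_1; assumption.
Qed.

Lemma is_derive_Rpower (a x : R) : 0 < x ->
  is_derive (fun s => Rpower s a) x (a * Rpower x (a - 1)).
Proof. intros. apply is_derive_Reals, derivable_pt_lim_power; assumption. Qed.

Lemma continuous_Rpower (a x : R) : 0 < x -> continuous (fun s => Rpower s a) x.
Proof.
  intros. apply (ex_derive_continuous (fun s => Rpower s a)).
  eexists. apply is_derive_Rpower; assumption.
Qed.

Lemma Rpower_eventually_lt (a eps : R) : 0 < a -> 0 < eps ->
  exists Z, 0 < Z /\ forall z, Z < z -> Rpower z (- a) < eps.
Proof.
  intros Ha He. exists (Rpower eps (- / a)). split; [apply Rpower_pos|].
  intros z Hz. assert (0 < z) by (pose proof (Rpower_pos eps (- / a)); lra).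
  rewrite Rpower_Ropp.
  replace eps with (/ Rpower (Rpower eps (- / a)) a).
  2: { rewrite Rpower_mult. replace (- / a * a) with (- (1)) by (field; lra).
       rewrite Rpower_Ropp, Rpower_1 by assumption. field. lra. }
  apply Rinv_lt_contravar.
  - apply Rmult_lt_0_compat; apply Rpower_pos.
  - apply Rlt_Rpower_l; [assumption|]. split; [apply Rpower_pos|assumption].
Qed.

(** Calculus rules specialised to [R -> R]: under [apply], Coquelicot's generic [plus], [mult], ...
    do not unify with [Rplus], [Rmult], ... *)

Lemma continuous_Rplus (f g : R -> R) x : continuous f x -> continuous g x ->
  continuous (fun s => f s + g s) x.
Proof. apply (continuous_plus f g). Qed.

Lemma continuous_Rminus (f g : R -> R) x : continuous f x -> continuous g x ->
  continuous (fun s => f s - g s) x.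
Proof. apply (continuous_minus f g). Qed.

Lemma continuous_Rmult (f g : R -> R) x : continuous f x -> continuous g x ->
  continuous (fun s => f s * g s) x.
Proof. apply (continuous_mult f g). Qed.

Lemma continuous_Rabs_comp (f : R -> R) x : continuous f x -> continuous (fun s => Rabs (f s)) x.
Proof. intros. apply (continuous_comp f Rabs); [assumption|apply continuous_Rabs]. Qed.

Lemma continuous_exp_comp (f : R -> R) x : continuous f x -> continuous (fun s => exp (f s)) x.
Proof.
  intros. apply (continuous_comp f exp); [assumption|].
  apply (ex_derive_continuous exp). eexists. apply is_derive_exp.
Qed.

Ltac solve_continuity := repeat match goal with
  | |- continuous (fun _ => _) _ => apply continuous_const
  | |- continuous (fun s => s) _ => apply continuous_id
  | |- continuous (fun s => Rpower s _) _ => apply continuous_Rpower; lra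
  | |- continuous (fun s => @?f s + @?g s) _ => apply (continuous_Rplus f g)
  | |- continuous (fun s => @?f s - @?g s) _ => apply (continuous_Rminus f g)
  | |- continuous (fun s => @?f s * @?g s) _ => apply (continuous_Rmult f g)
  | |- continuous (fun s => Rabs (@?f s)) _ => apply (continuous_Rabs_comp f)
  | |- continuous (fun s => exp (@?f s)) _ => apply (continuous_exp_comp f)
  | |- continuous _ _ => assumption
  end.

Lemma is_derive_eq (f : R -> R) (x l l' : R) :
  is_derive f x l -> l = l' -> is_derive f x l'.
Proof. intros; subst; assumption. Qed.

Lemma is_derive_ext_near (f g : R -> R) (x : R) (d : posreal) (l : R) :
  (forall t, Rabs (t - x) < d -> f t = g t) -> is_derive f x l -> is_derive g x l.
Proof. intros Hd H. apply (is_derive_ext_loc f g x l); [|assumption]. exists d. exact Hd. Qed.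

Lemma is_derive_Rplus (f g : R -> R) x df dg : is_derive f x df -> is_derive g x dg ->
  is_derive (fun s => f s + g s) x (df + dg).
Proof. intros. apply (is_derive_plus f g x df dg); assumption. Qed.

Lemma is_derive_Rminus (f g : R -> R) x df dg : is_derive f x df -> is_derive g x dg ->
  is_derive (fun s => f s - g s) x (df - dg).
Proof. intros. apply (is_derive_minus f g x df dg); assumption. Qed.

Lemma is_derive_Rmult (f g : R -> R) x df dg : is_derive f x df -> is_derive g x dg ->
  is_derive (fun s => f s * g s) x (df * g x + f x * dg).
Proof. intros. apply (is_derive_mult f g x df dg); try assumption. exact Rmult_comm. Qed.

Lemma is_derive_Rscal (f : R -> R) x k df : is_derive f x df ->
  is_derive (fun s => k * f s) x (k * df).
Proof. intros. apply is_derive_scal; assumption. Qed.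

Lemma is_derive_Rcomp (f g : R -> R) x df dg : is_derive f (g x) df -> is_derive g x dg ->
  is_derive (fun s => f (g s)) x (dg * df).
Proof. intros. apply (is_derive_comp f g x df dg); assumption. Qed.

Lemma ex_RInt_continuous_pos (h : R -> R) (a b : R) : 0 < a -> 0 < b ->
  (forall s, 0 < s -> continuous h s) -> ex_RInt h a b.
Proof.
  intros Ha Hb Hh. apply (ex_RInt_continuous (V:=R_CompleteNormedModule) h). intros z Hz.
  apply Hh. assert (0 < Rmin a b) by (apply Rmin_glb_lt; assumption). lra.
Qed.

Lemma is_RInt_Rpower (a e r : R) : -1 < a -> 0 < e -> e <= r ->
  is_RInt (fun s => Rpower s a) e r ((Rpower r (a + 1) - Rpower e (a + 1)) / (a + 1)).
Proof.
  intros Ha He Her.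
  replace ((Rpower r (a + 1) - Rpower e (a + 1)) / (a + 1)) with
    (minus (Rpower r (a + 1) / (a + 1)) (Rpower e (a + 1) / (a + 1)))
    by (unfold minus, plus, opp; simpl; field; lra).
  apply (is_RInt_derive (fun s => Rpower s (a + 1) / (a + 1))).
  - intros x Hx. rewrite Rmin_left in Hx by lra.
    unfold Rpower. auto_derive; [lra|].
    replace ((a + 1) * ln x) with (ln x + a * ln x) by ring.
    rewrite exp_plus, exp_ln by lra. field. lra.
  - intros x Hx. rewrite Rmin_left in Hx by lra. apply continuous_Rpower; lra.
Qed.

Lemma RInt_Rpower_le (a e r : R) : -1 < a -> 0 < e -> e <= r ->
  RInt (fun s => Rpower s a) e r <= Rpower r (a + 1) / (a + 1).
Proof.
  intros. rewrite (is_RInt_unique _ _ _ _ (is_RInt_Rpower a e r H H0 H1)).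
  pose proof (Rpower_pos e (a + 1)). unfold Rdiv.
  apply Rmult_le_compat_r; [left; apply Rinv_0_lt_compat|]; lra.
Qed.

Lemma RInt_ext_R (f g : R -> R) (a b : R) :
  (forall x, Rmin a b < x < Rmax a b -> f x = g x) -> RInt f a b = RInt g a b.
Proof. apply RInt_ext. Qed.

Lemma RInt_scal_R (h : R -> R) (a b c : R) : ex_RInt h a b ->
  RInt (fun s => c * h s) a b = c * RInt h a b.
Proof. intros. exact (RInt_scal (V := R_CompleteNormedModule) h a b c H). Qed.

Lemma RInt_lin_comb (h1 h2 : R -> R) (a b c1 c2 : R) : ex_RInt h1 a b -> ex_RInt h2 a b ->
  RInt (fun s => c1 * h1 s + c2 * h2 s) a b = c1 * RInt h1 a b + c2 * RInt h2 a b.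
Proof.
  intros E1 E2. rewrite <- (RInt_scal_R h1), <- (RInt_scal_R h2) by assumption.
  apply (RInt_plus (V := R_CompleteNormedModule) (fun s => c1 * h1 s) (fun s => c2 * h2 s));
    apply (ex_RInt_scal (V := R_CompleteNormedModule)); assumption.
Qed.

Lemma RInt_le_two_powers (h : R -> R) (a1 a2 b1 b2 e r R0 : R) :
  -1 < b1 -> -1 < b2 -> 0 <= a1 -> 0 <= a2 -> 0 < e -> e <= r -> r <= R0 -> ex_RInt h e r ->
  (forall s, e < s < r -> h s <= a1 * Rpower s b1 + a2 * Rpower s b2) ->
  RInt h e r <= a1 * Rpower R0 (b1 + 1) / (b1 + 1) + a2 * Rpower R0 (b2 + 1) / (b2 + 1).
Proof.
  intros Hb1 Hb2 Ha1 Ha2 He Her HrR Eh Hh.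
  assert (Epow : forall b, ex_RInt (fun s => Rpower s b) e r).
  { intros b. apply ex_RInt_continuous_pos; [lra|lra|]. intros; solve_continuity. }
  assert (Hpow : forall b, -1 < b -> RInt (fun s => Rpower s b) e r <= Rpower R0 (b + 1) / (b + 1)).
  { intros b Hb. apply Rle_trans with (Rpower r (b + 1) / (b + 1)); [apply RInt_Rpower_le; lra|].
    unfold Rdiv. apply Rmult_le_compat_r; [left; apply Rinv_0_lt_compat; lra|].
    apply Rle_Rpower_l; lra. }
  apply Rle_trans with (RInt (fun s => a1 * Rpower s b1 + a2 * Rpower s b2) e r).
  { apply RInt_le; try assumption.
    apply ex_RInt_continuous_pos; [lra|lra|]. intros; solve_continuity. }
  rewrite RInt_lin_comb by apply Epow.
  pose proof (Hpow b1 Hb1). pose proof (Hpow b2 Hb2). unfold Rdiv in *.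
  apply Rplus_le_compat; rewrite Rmult_assoc; apply Rmult_le_compat_l; assumption.
Qed.

Definition pospow (q x : R) : R := powp (Rmax x 0) q.

Lemma pospow_pos (q x : R) : 0 < x -> pospow q x = Rpower x q.
Proof.
  intros. unfold pospow, powp. rewrite Rmax_left by lra.
  destruct (Rlt_dec 0 x); [reflexivity|lra].
Qed.

Lemma pospow_nonpos (q x : R) : x <= 0 -> pospow q x = 0.
Proof.
  intros. unfold pospow, powp. rewrite Rmax_right by lra.
  destruct (Rlt_dec 0 0); [lra|reflexivity].
Qed.

Lemma pospow_ge0 (q x : R) : 0 <= pospow q x.
Proof.
  destruct (Rle_or_lt x 0).
  - rewrite pospow_nonpos; lra.
  - rewrite pospow_pos by assumption. left; apply Rpower_pos.
Qed.

Lemma pospow_le (q x z : R) : 0 <= q -> x <= z -> 0 < z -> pospow q x <= Rpower z q.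
Proof.
  intros. destruct (Rle_or_lt x 0).
  - rewrite pospow_nonpos by assumption. left; apply Rpower_pos.
  - rewrite pospow_pos by assumption. apply Rle_Rpower_l; lra.
Qed.

Lemma pospow_le_1 (q x : R) : 0 <= q -> x <= 1 -> pospow q x <= 1.
Proof. intros. rewrite <- (Rpower_base_1 q). apply pospow_le; lra. Qed.

Lemma pospow_scale (q c x : R) : 0 < c -> pospow q (c * x) = Rpower c q * pospow q x.
Proof.
  intros. destruct (Rle_or_lt x 0).
  - rewrite !pospow_nonpos by nra. ring.
  - rewrite !pospow_pos by nra. rewrite Rpower_mult_distr; auto.
Qed.

Lemma mul_pospow (q x : R) : x * pospow q x = pospow (q + 1) x.
Proof.
  destruct (Rle_or_lt x 0).
  - rewrite !pospow_nonpos by nra. ring.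
  - rewrite !pospow_pos by nra. rewrite Rpower_plus, Rpower_1 by auto. ring.
Qed.

Lemma is_derive_pospow (q x : R) : 1 < q -> is_derive (pospow q) x (q * pospow (q - 1) x).
Proof.
  intros Hq. destruct (Rlt_or_le 0 x) as [hx|[hx|hx]].
  - rewrite (pospow_pos (q - 1) x) by lra.
    apply (is_derive_ext_near (fun s => Rpower s q) _ _ (mkposreal x hx));
      [|apply is_derive_Rpower; lra].
    intros t Ht. apply Rabs_lt_between in Ht. simpl in Ht. rewrite pospow_pos by lra. reflexivity.
  - rewrite pospow_nonpos, Rmult_0_r by lra. assert (hx' : 0 < - x) by lra.
    apply (is_derive_ext_near (fun _ => 0) _ _ (mkposreal _ hx')); [|apply (is_derive_const 0)].
    intros t Ht. apply Rabs_lt_between in Ht. simpl in Ht.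
    rewrite pospow_nonpos by lra. reflexivity.
  - (* at [0] the difference quotient is [h^(q-1)] or [0] *)
    subst x. rewrite pospow_nonpos, Rmult_0_r by lra.
    apply is_derive_Reals. intros eps Heps.
    exists (mkposreal _ (Rpower_pos eps (/ (q - 1)))). intros h Hh0 Hh. simpl in Hh.
    rewrite Rplus_0_l, (pospow_nonpos q 0), !Rminus_0_r by lra.
    destruct (Rle_or_lt h 0).
    + rewrite pospow_nonpos by assumption. unfold Rdiv. rewrite Rmult_0_l, Rabs_R0. assumption.
    + rewrite pospow_pos by assumption. rewrite Rabs_pos_eq in Hh by lra.
      replace (Rpower h q / h) with (Rpower h (q - 1)).
      2: { replace q with ((q - 1) + 1) at 2 by ring.
           rewrite Rpower_plus, Rpower_1 by assumption. field. lra. }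
      rewrite Rabs_pos_eq by (left; apply Rpower_pos).
      replace eps with (Rpower (Rpower eps (/ (q - 1))) (q - 1)).
      2: { rewrite Rpower_mult. replace (/ (q - 1) * (q - 1)) with 1 by (field; lra).
           apply Rpower_1; assumption. }
      apply Rlt_Rpower_l; lra.
Qed.

Lemma continuous_pospow (q x : R) : 1 < q -> continuous (pospow q) x.
Proof.
  intros. apply (ex_derive_continuous (pospow q)). eexists. apply is_derive_pospow; assumption.
Qed.

Lemma pospow_lipschitz (q x y z : R) : 1 <= q -> x <= z -> y <= z -> 0 < z ->
  Rabs (pospow q x - pospow q y) <= q * Rpower z (q - 1) * Rabs (x - y).
Proof.
  intros Hq Hx Hy Hz.
  assert (Hzq : 0 < Rpower z (q - 1)) by apply Rpower_pos.
  assert (mixed : forall a b, 0 < a -> a <= z -> b <= 0 ->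
     Rabs (pospow q a - pospow q b) <= q * Rpower z (q - 1) * Rabs (a - b)).
  { intros a b Ha Haz Hb. rewrite pospow_pos, pospow_nonpos by lra.
    rewrite Rminus_0_r, Rabs_pos_eq by (left; apply Rpower_pos).
    rewrite (Rabs_pos_eq (a - b)) by lra.
    replace (Rpower a q) with (a * Rpower a (q - 1)).
    2: { replace q with ((q - 1) + 1) at 2 by ring. rewrite Rpower_plus, Rpower_1 by lra. ring. }
    assert (Rpower a (q - 1) <= Rpower z (q - 1)) by (apply Rle_Rpower_l; lra).
    pose proof (Rpower_pos a (q - 1)).
    apply Rle_trans with ((a - b) * Rpower z (q - 1)); [nra|].
    assert (0 <= (a - b) * Rpower z (q - 1)) by (apply Rmult_le_pos; lra). nra. }
  destruct (Rle_or_lt x 0); destruct (Rle_or_lt y 0).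
  - rewrite !pospow_nonpos by assumption. rewrite Rminus_0_r, Rabs_R0.
    apply Rmult_le_pos; [nra|apply Rabs_pos].
  - rewrite Rabs_minus_sym, (Rabs_minus_sym x). apply mixed; assumption.
  - apply mixed; assumption.
  - rewrite !pospow_pos by assumption.
    assert (0 < Rmin x y) by (apply Rmin_glb_lt; assumption).
    destruct (MVT_gen (fun s => Rpower s q) x y (fun s => q * Rpower s (q - 1))) as [c [Hc Hmvt]].
    + intros s Hs. apply is_derive_Rpower. lra.
    + intros s Hs. apply continuity_pt_filterlim, continuous_Rpower. lra.
    + rewrite Rabs_minus_sym, Hmvt, Rabs_mult, (Rabs_minus_sym x).
      apply Rmult_le_compat_r; [apply Rabs_pos|].
      assert (Rmax x y <= z) by (apply Rmax_lub; assumption).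
      pose proof (Rpower_pos c (q - 1)).
      rewrite Rabs_pos_eq by nra.
      apply Rmult_le_compat_l; [lra|]. apply Rle_Rpower_l; lra.
Qed.

Definition lim_at_0 (F : R -> R) (l : R) : Prop := filterlim F (at_right 0) (locally l).

Lemma at_right_0_interval (r : R) : 0 < r -> at_right 0 (fun e => 0 < e < r).
Proof.
  intros Hr. exists (mkposreal r Hr). intros e He He0. split; [exact He0|].
  change (Rabs (e - 0) < r) in He. rewrite Rminus_0_r, Rabs_pos_eq in He; lra.
Qed.

Lemma lim_at_0_le (F : R -> R) (l c r : R) : 0 < r -> lim_at_0 F l ->
  (forall e, 0 < e < r -> F e <= c) -> l <= c.
Proof.
  intros Hr H Hb. apply (closed_filterlim_loc (F := at_right 0) F (fun x => x <= c) l H).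
  - apply (filter_imp (fun e => 0 < e < r)); [exact Hb|apply at_right_0_interval, Hr].
  - apply closed_le.
Qed.

Lemma lim_at_0_ge (F : R -> R) (l c r : R) : 0 < r -> lim_at_0 F l ->
  (forall e, 0 < e < r -> c <= F e) -> c <= l.
Proof.
  intros Hr H Hb. apply (closed_filterlim_loc (F := at_right 0) F (fun x => c <= x) l H).
  - apply (filter_imp (fun e => 0 < e < r)); [exact Hb|apply at_right_0_interval, Hr].
  - apply closed_ge.
Qed.

Lemma lim_at_0_abs_le (F : R -> R) (l c r : R) : 0 < r -> lim_at_0 F l ->
  (forall e, 0 < e < r -> Rabs (F e) <= c) -> Rabs l <= c.
Proof.
  intros Hr H Hb. apply Rabs_le. split.
  - apply (lim_at_0_ge F l (- c) r Hr H). intros e He.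
    specialize (Hb e He). apply Rabs_le_between in Hb. lra.
  - apply (lim_at_0_le F l c r Hr H). intros e He.
    specialize (Hb e He). apply Rabs_le_between in Hb. lra.
Qed.

Lemma lim_at_0_pos (F : R -> R) (l : R) : 0 < l -> lim_at_0 F l ->
  exists d, 0 < d /\ forall e, 0 < e < d -> 0 < F e.
Proof.
  intros Hl H.
  destruct (H (fun x => 0 < x)) as [d Hd].
  { exists (mkposreal l Hl). intros y Hy. change (Rabs (y - l) < l) in Hy.
    apply Rabs_lt_between in Hy. lra. }
  exists d. split; [apply cond_pos|]. intros e He. apply Hd; [|lra].
  change (Rabs (e - 0) < d). rewrite Rminus_0_r, Rabs_pos_eq; lra.
Qed.

Lemma lim_at_0_unique (F : R -> R) (l1 l2 : R) : lim_at_0 F l1 -> lim_at_0 F l2 -> l1 = l2.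
Proof. apply (filterlim_locally_unique (V := R_NormedModule) (F := at_right 0)). Qed.

Lemma lim_at_0_lin (F G : R -> R) (l1 l2 a b c : R) : lim_at_0 F l1 -> lim_at_0 G l2 ->
  lim_at_0 (fun e => a * F e + b * G e + c) (a * l1 + b * l2 + c).
Proof.
  intros H1 H2. unfold lim_at_0.
  assert (Hscal : forall (H : R -> R) l k, lim_at_0 H l -> lim_at_0 (fun e => k * H e) (k * l)).
  { intros H l k HH. apply (filterlim_comp _ _ _ H (fun x => k * x) _ _ _ HH).
    apply (continuous_mult (fun _ => k) (fun x => x));
      [apply continuous_const|apply continuous_id]. }
  assert (Hplus : forall (H1 H2 : R -> R) m1 m2, lim_at_0 H1 m1 -> lim_at_0 H2 m2 ->
            lim_at_0 (fun e => H1 e + H2 e) (m1 + m2)).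
  { intros F1 F2 m1 m2 L1 L2. apply (filterlim_comp_2 F1 F2 Rplus L1 L2).
    apply (filterlim_plus (K := R_AbsRing) (V := R_NormedModule)). }
  apply Hplus; [apply Hplus; apply Hscal; assumption|apply filterlim_const].
Qed.

Lemma lim_at_0_ext (F G : R -> R) (l d : R) : 0 < d ->
  (forall e, 0 < e < d -> F e = G e) -> lim_at_0 F l -> lim_at_0 G l.
Proof.
  intros Hd He H. apply (filterlim_ext_loc F G); [|exact H].
  apply (filter_imp (fun e => 0 < e < d)); [exact He|apply at_right_0_interval, Hd].
Qed.

Lemma lim_at_0_squeeze (F G : R -> R) (d : R) : 0 < d ->
  (forall e, 0 < e < d -> Rabs (F e) <= G e) -> lim_at_0 G 0 -> lim_at_0 F 0.
Proof.
  intros Hd Hb HG P [eps Heps].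
  destruct (filter_and _ _ (at_right_0_interval d Hd) (HG (ball 0 eps) (locally_ball 0 eps)))
    as [d2 Hd2].
  exists d2. intros y Hy Hy0. destruct (Hd2 y Hy Hy0) as [Hyd HGy].
  apply Heps. change (Rabs (F y - 0) < eps). change (Rabs (G y - 0) < eps) in HGy.
  specialize (Hb y Hyd). rewrite Rminus_0_r in *. apply Rabs_lt_between in HGy.
  pose proof (Rabs_pos (F y)). lra.
Qed.

Lemma lim_at_0_Rpower (a : R) : 0 < a -> lim_at_0 (fun r => Rpower r a) 0.
Proof.
  intros Ha P [eps Heps].
  exists (mkposreal _ (Rpower_pos eps (/ a))). intros y Hy Hy0. apply Heps.
  change (Rabs (y - 0) < Rpower eps (/ a)) in Hy. rewrite Rminus_0_r, Rabs_pos_eq in Hy by lra.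
  change (Rabs (Rpower y a - 0) < eps). rewrite Rminus_0_r, Rabs_pos_eq by (left; apply Rpower_pos).
  replace (pos eps) with (Rpower (Rpower eps (/ a)) a).
  2: { rewrite Rpower_mult. replace (/ a * a) with 1 by (field; lra). apply Rpower_1, cond_pos. }
  apply Rlt_Rpower_l; lra.
Qed.

Lemma filterlim_scal_at_right_0 (lam : R) : 0 < lam ->
  filterlim (fun e => lam * e) (at_right 0) (at_right 0).
Proof.
  intros Hl P [d Hd]. assert (hd : 0 < d / lam) by (apply Rdiv_lt_0_compat; [apply cond_pos|auto]).
  exists (mkposreal _ hd). intros y Hy Hy0. apply Hd; [|nra].
  change (Rabs (y - 0) < d / lam) in Hy. change (Rabs (lam * y - 0) < d).
  rewrite Rminus_0_r in *. rewrite Rabs_mult, (Rabs_pos_eq lam) by lra.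
  apply (Rmult_lt_compat_l lam) in Hy; [|assumption].
  replace (lam * (d / lam)) with (pos d) in Hy by (field; lra). assumption.
Qed.

Lemma lim_at_0_RInt_gen (h : R -> R) (r l : R) :
  is_RInt_gen h (at_right 0) (at_point r) l -> lim_at_0 (fun e => RInt h e r) l.
Proof.
  intros H P HP. destruct (H P HP) as [Q R' HQ HR Hqr].
  unfold filtermap. apply (filter_imp Q); [|exact HQ]. intros e He.
  destruct (Hqr e r He HR) as [y [Hy Py]]. simpl in Hy.
  rewrite (is_RInt_unique _ _ _ _ Hy). exact Py.
Qed.

Lemma is_lim_p_infty_0 (F : R -> R) :
  (forall eps, 0 < eps -> exists M, forall x, M < x -> Rabs (F x) <= eps) -> is_lim F p_infty 0.
Proof.
  intros H P [eps Heps].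
  destruct (H (eps / 2) ltac:(destruct eps; simpl; lra)) as [M HM].
  exists M. intros x Hx. apply Heps. change (Rabs (F x - 0) < eps).
  rewrite Rminus_0_r. specialize (HM x Hx). destruct eps; simpl in *; lra.
Qed.

Section ImproperIntegral.

Variable h : R -> R.
Hypothesis h_cont : forall s, 0 < s -> continuous h s.

Lemma improper_RInt_Chasles (a b Ia : R) : 0 < a -> 0 < b ->
  lim_at_0 (fun e => RInt h e a) Ia -> lim_at_0 (fun e => RInt h e b) (Ia + RInt h a b).
Proof.
  intros Ha Hb HI.
  assert (Hd : 0 < Rmin a b) by (apply Rmin_glb_lt; assumption).
  apply (lim_at_0_ext (fun e => 1 * RInt h e a + 0 * RInt h e a + RInt h a b) _ _ _ Hd).
  - intros e He.
    rewrite <- (RInt_Chasles h e a b) by (apply ex_RInt_continuous_pos; [lra|lra|exact h_cont]).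
    simpl. unfold plus. simpl. ring.
  - replace (Ia + RInt h a b) with (1 * Ia + 0 * Ia + RInt h a b) by ring.
    apply lim_at_0_lin; assumption.
Qed.

Lemma is_derive_improper_RInt (I : R -> R) :
  (forall r, 0 < r -> lim_at_0 (fun e => RInt h e r) (I r)) ->
  forall r, 0 < r -> is_derive I r (h r).
Proof.
  intros HI r Hr.
  assert (HIr : forall t, 0 < t -> I t = I 1 + RInt h 1 t).
  { intros t Ht. apply (lim_at_0_unique (fun e => RInt h e t)); [apply HI, Ht|].
    apply improper_RInt_Chasles; [lra|assumption|apply HI; lra]. }
  apply (is_derive_ext_near (fun t => I 1 + RInt h 1 t) _ _ (mkposreal r Hr)).
  { intros t Ht. simpl in Ht. apply Rabs_lt_between in Ht. rewrite (HIr t) by lra. reflexivity. }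
  apply (is_derive_eq _ _ (0 + h r)); [|ring].
  apply is_derive_Rplus; [apply (is_derive_const (I 1))|].
  apply (is_derive_RInt h (fun t => RInt h 1 t) 1 r); [|apply h_cont, Hr].
  exists (mkposreal r Hr). intros b Hb. change (Rabs (b - r) < r) in Hb.
  apply Rabs_lt_between in Hb.
  apply (RInt_correct (V := R_CompleteNormedModule)).
  apply ex_RInt_continuous_pos; [lra|lra|exact h_cont].
Qed.

End ImproperIntegral.

(** * The integral equation *)

(** [v r = zeta - int_0^r green n r s * source s ds] is the integrated form of
    [(r^(n-1) v')' = - r^(n-1) source]. *)
Definition green (n r s : R) : R :=
  (Rpower s (2 - n) - Rpower r (2 - n)) / (n - 2) * Rpower s (n - 1).

Definition source (p mu : R) (Kf f v : R -> R) (s : R) : R := Kf s * pospow p (v s) + mu * f s.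

Definition integral_solution (n p mu : R) (Kf f : R -> R) (zeta : R) (v : R -> R) : Prop :=
  lim_at_0 v zeta /\
  (forall r, 0 < r -> continuous v r) /\
  (forall r, 0 < r ->
     lim_at_0 (fun e => RInt (fun s => green n r s * source p mu Kf f v s) e r) (zeta - v r)).

Lemma regular_solution_integral_solution N p mu Kf f zeta v :
  regular_solution N p mu Kf f zeta v -> integral_solution (INR N) p mu Kf f zeta v.
Proof.
  intros [_ [Hlim [Hcont Hint]]]. split; [exact Hlim|]. split; [exact Hcont|].
  intros r Hr. apply lim_at_0_RInt_gen, (Hint r Hr).
Qed.

Lemma green_bounds (n r s : R) : 2 < n -> 0 < s <= r ->
  0 <= green n r s /\ green n r s <= s / (n - 2).
Proof.
  intros Hn Hs. unfold green.
  assert (Rpower r (2 - n) <= Rpower s (2 - n)).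
  { replace (2 - n) with (- (n - 2)) by ring. rewrite !Rpower_Ropp.
    apply Rinv_le_contravar; [apply Rpower_pos|apply Rle_Rpower_l; lra]. }
  pose proof (Rpower_pos s (n - 1)). pose proof (Rpower_pos r (2 - n)).
  split.
  - apply Rmult_le_pos; [apply Rdiv_le_0_compat|]; lra.
  - replace ((Rpower s (2 - n) - Rpower r (2 - n)) / (n - 2) * Rpower s (n - 1)) with
      ((Rpower s (2 - n) * Rpower s (1 - (2 - n)) - Rpower r (2 - n) * Rpower s (n - 1)) / (n - 2))
      by (replace (1 - (2 - n)) with (n - 1) by ring; field; lra).
    rewrite Rpower_mul_1_minus by lra. unfold Rdiv.
    apply Rmult_le_compat_r; [left; apply Rinv_0_lt_compat; lra|nra].
Qed.

Lemma continuous_green (n r s : R) : 0 < s -> continuous (green n r) s.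
Proof. intros Hs. unfold green, Rdiv. solve_continuity. Qed.

Lemma continuous_source (p mu : R) (Kf f v : R -> R) (s : R) : 1 < p ->
  continuous Kf s -> continuous f s -> continuous v s -> continuous (source p mu Kf f v) s.
Proof.
  intros Hp HK Hf Hv. unfold source.
  pose proof (continuous_comp v (pospow p) s Hv (continuous_pospow p (v s) Hp)).
  solve_continuity.
Qed.

Lemma green_RInt_split (n r e : R) (g : R -> R) : 2 < n -> 0 < e -> 0 < r ->
  (forall s, 0 < s -> continuous g s) ->
  (n - 2) * RInt (fun s => green n r s * g s) e r =
  RInt (fun s => s * g s) e r - Rpower r (2 - n) * RInt (fun s => Rpower s (n - 1) * g s) e r.
Proof.
  intros Hn He Hr Hg.
  assert (E : forall c, ex_RInt (fun s => Rpower s c * g s) e r).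
  { intros c. apply ex_RInt_continuous_pos; [lra|lra|]. intros s Hs.
    apply (continuous_mult (fun s => Rpower s c) g); [apply continuous_Rpower|apply Hg]; lra. }
  assert (Hs1 : forall s, Rmin e r < s < Rmax e r ->
                 Rpower s (2 - n) * (Rpower s (n - 1) * g s) = s * g s).
  { intros s Hs. assert (0 < Rmin e r) by (apply Rmin_glb_lt; assumption).
    rewrite <- Rmult_assoc. replace (n - 1) with (1 - (2 - n)) by ring.
    rewrite Rpower_mul_1_minus by lra. reflexivity. }
  rewrite (RInt_ext_R _ (fun s => / (n - 2) * (Rpower s (2 - n) * (Rpower s (n - 1) * g s))
                              + (- Rpower r (2 - n) / (n - 2)) * (Rpower s (n - 1) * g s))).
  2: { intros s Hs. unfold green. field. lra. }
  assert (E' : ex_RInt (fun s => Rpower s (2 - n) * (Rpower s (n - 1) * g s)) e r).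
  { apply ex_RInt_continuous_pos; [lra|lra|]. intros s Hs. specialize (Hg s Hs). solve_continuity. }
  rewrite RInt_lin_comb, (RInt_ext_R _ _ _ _ Hs1) by (apply E' || apply E).
  field. lra.
Qed.

Section IntegralEquation.

Variables (n p mu zeta : R) (Kf f v : R -> R).
Hypotheses (Hn : 2 < n) (Hp : 1 < p).
Hypothesis Kf_cont : forall s, 0 < s -> continuous Kf s.
Hypothesis f_cont : forall s, 0 < s -> continuous f s.
Hypothesis v_sol : integral_solution n p mu Kf f zeta v.

Local Notation g := (source p mu Kf f v).

Lemma continuous_source_solution (s : R) : 0 < s -> continuous g s.
Proof. intros Hs. destruct v_sol as [_ [Hv _]]. apply continuous_source; auto. Qed.

Lemma continuous_Rpower_mul_source (c : R) (s : R) : 0 < s ->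
  continuous (fun s => Rpower s c * g s) s.
Proof. intros Hs. pose proof (continuous_source_solution s Hs). solve_continuity. Qed.

Lemma continuous_mul_source (s : R) : 0 < s -> continuous (fun s => s * g s) s.
Proof. intros Hs. pose proof (continuous_source_solution s Hs). solve_continuity. Qed.

Lemma continuous_green_source (r s : R) : 0 < s -> continuous (fun s => green n r s * g s) s.
Proof.
  intros Hs. pose proof (continuous_source_solution s Hs). pose proof (continuous_green n r s Hs).
  solve_continuity.
Qed.

Lemma ex_RInt_green_source (r e : R) : 0 < e -> 0 < r ->
  ex_RInt (fun s => green n r s * g s) e r.
Proof. intros. apply ex_RInt_continuous_pos; try assumption. apply continuous_green_source. Qed.

Lemma green_source_RInt_split_at_1 (r e : R) : 0 < r -> 0 < e ->
  (n - 2) * RInt (fun s => green n r s * g s) e r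
  = RInt (fun s => s * g s) e 1 + RInt (fun s => s * g s) 1 r
    - Rpower r (2 - n) * (RInt (fun s => Rpower s (n - 1) * g s) e 1
                          + RInt (fun s => Rpower s (n - 1) * g s) 1 r).
Proof.
  intros Hr He. rewrite green_RInt_split by (assumption || exact continuous_source_solution).
  rewrite <- (RInt_Chasles (fun s => s * g s) e 1 r),
          <- (RInt_Chasles (fun s => Rpower s (n - 1) * g s) e 1 r)
    by (apply ex_RInt_continuous_pos; [lra|lra|apply continuous_mul_source
                                             || apply continuous_Rpower_mul_source]).
  reflexivity.
Qed.

(** The convergence of [int_e^r green * g] for the two radii [r = 1, 2] separates the
    two improper integrals it is made of, since [1^(2-n) <> 2^(2-n)]. *)
Lemma integral_solution_improper_integrals :
  exists Ia Ib : R -> R, forall r, 0 < r ->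
    lim_at_0 (fun e => RInt (fun s => s * g s) e r) (Ia r) /\
    lim_at_0 (fun e => RInt (fun s => Rpower s (n - 1) * g s) e r) (Ib r).
Proof.
  destruct v_sol as [_ [_ Hw]].
  set (T := fun r e => RInt (fun s => green n r s * g s) e r).
  set (I1 := fun e => RInt (fun s => s * g s) e 1).
  set (J1 := fun e => RInt (fun s => Rpower s (n - 1) * g s) e 1).
  set (A2 := RInt (fun s => s * g s) 1 2).
  set (B2 := RInt (fun s => Rpower s (n - 1) * g s) 1 2).
  set (c2 := Rpower 2 (2 - n)).
  assert (Hc2 : c2 < 1).
  { unfold c2. rewrite <- (Rpower_O 2) by lra. apply Rpower_lt; lra. }
  assert (LJ : lim_at_0 J1 ((n - 2) / (c2 - 1) * (zeta - v 1) + - (n - 2) / (c2 - 1) * (zeta - v 2)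
                            + (A2 - c2 * B2) / (c2 - 1))).
  { apply (lim_at_0_ext (fun e => (n - 2) / (c2 - 1) * T 1 e + - (n - 2) / (c2 - 1) * T 2 e
                                  + (A2 - c2 * B2) / (c2 - 1)) _ _ 1 Rlt_0_1).
    - intros e He. apply (Rmult_eq_reg_l (c2 - 1)); [|lra].
      replace ((c2 - 1) * ((n - 2) / (c2 - 1) * T 1 e + - (n - 2) / (c2 - 1) * T 2 e
                          + (A2 - c2 * B2) / (c2 - 1)))
        with ((n - 2) * T 1 e - (n - 2) * T 2 e + (A2 - c2 * B2)) by (field; lra).
      unfold T, J1. rewrite !green_source_RInt_split_at_1 by lra.
      rewrite Rpower_base_1, !RInt_point. fold A2 B2 c2. unfold zero. simpl. ring.
    - apply lim_at_0_lin; apply Hw; lra. }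
  assert (LI : lim_at_0 I1 ((n - 2) * (zeta - v 1) + 1 * ((n - 2) / (c2 - 1) * (zeta - v 1)
            + - (n - 2) / (c2 - 1) * (zeta - v 2) + (A2 - c2 * B2) / (c2 - 1)) + 0)).
  { apply (lim_at_0_ext (fun e => (n - 2) * T 1 e + 1 * J1 e + 0) _ _ 1 Rlt_0_1).
    - intros e He. unfold T, I1, J1. rewrite green_source_RInt_split_at_1 by lra.
      rewrite Rpower_base_1, !RInt_point. unfold zero. simpl. ring.
    - apply lim_at_0_lin; [apply Hw; lra|exact LJ]. }
  destruct (ex_intro (lim_at_0 I1) _ LI) as [li Li].
  destruct (ex_intro (lim_at_0 J1) _ LJ) as [lj Lj].
  exists (fun r => li + RInt (fun s => s * g s) 1 r),
         (fun r => lj + RInt (fun s => Rpower s (n - 1) * g s) 1 r).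
  intros r Hr. split; apply improper_RInt_Chasles; try assumption; try lra.
  - apply continuous_mul_source.
  - apply continuous_Rpower_mul_source.
Qed.

Lemma integral_solution_flux :
  exists B : R -> R,
    (forall r, 0 < r -> lim_at_0 (fun e => RInt (fun s => Rpower s (n - 1) * g s) e r) (B r)) /\
    (forall r, 0 < r -> is_derive v r (- Rpower r (1 - n) * B r)).
Proof.
  destruct integral_solution_improper_integrals as [Ia [Ib HI]].
  destruct v_sol as [_ [_ Hw]].
  exists Ib. split; [intros r Hr; apply (HI r Hr)|].
  assert (Hv : forall r, 0 < r -> v r = zeta - / (n - 2) * (Ia r - Rpower r (2 - n) * Ib r)).
  { intros r Hr.
    assert (L : lim_at_0 (fun e => RInt (fun s => green n r s * g s) e r)
                  (/ (n - 2) * Ia r + (- Rpower r (2 - n) / (n - 2)) * Ib r + 0)).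
    { apply (lim_at_0_ext (fun e => / (n - 2) * RInt (fun s => s * g s) e r
               + (- Rpower r (2 - n) / (n - 2)) * RInt (fun s => Rpower s (n - 1) * g s) e r + 0)
               _ _ 1 Rlt_0_1).
      - intros e He. apply (Rmult_eq_reg_l (n - 2)); [|lra].
        rewrite green_RInt_split by (assumption || lra || exact continuous_source_solution).
        field. lra.
      - apply (lim_at_0_lin _ _ (Ia r) (Ib r)); [exact (proj1 (HI r Hr))|exact (proj2 (HI r Hr))]. }
    replace (v r) with (zeta - (zeta - v r)) by ring.
    rewrite (lim_at_0_unique _ _ _ (Hw r Hr) L). field. lra. }
  intros r Hr.
  apply (is_derive_ext_near (fun r => zeta - / (n - 2) * (Ia r - Rpower r (2 - n) * Ib r))
           _ _ (mkposreal r Hr)).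
  { intros t Ht. simpl in Ht. apply Rabs_lt_between in Ht. symmetry. apply Hv. lra. }
  assert (DIa : is_derive Ia r (r * g r))
    by exact (is_derive_improper_RInt _ continuous_mul_source Ia
                (fun t Ht => proj1 (HI t Ht)) r Hr).
  assert (DIb : is_derive Ib r (Rpower r (n - 1) * g r))
    by exact (is_derive_improper_RInt _ (continuous_Rpower_mul_source (n - 1)) Ib
                (fun t Ht => proj2 (HI t Ht)) r Hr).
  eapply is_derive_eq.
  { apply is_derive_Rminus; [apply (is_derive_const zeta)|]. apply is_derive_Rscal.
    apply is_derive_Rminus; [exact DIa|].
    apply is_derive_Rmult; [apply is_derive_Rpower, Hr|exact DIb]. }
  rewrite <- Rmult_assoc. replace (n - 1) with (1 - (2 - n)) by ring.
  rewrite Rpower_mul_1_minus by exact Hr. replace (2 - n - 1) with (1 - n) by ring.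
  unfold zero. simpl. field. lra.
Qed.

Section NonnegativeSource.

Hypothesis g_ge0 : forall s, 0 < s -> 0 <= g s.

Lemma integral_solution_le (r : R) : 0 < r -> v r <= zeta.
Proof.
  intros Hr. destruct v_sol as [_ [_ Hw]].
  assert (0 <= zeta - v r); [|lra].
  apply (lim_at_0_ge _ _ 0 r Hr (Hw r Hr)). intros e He.
  apply RInt_ge_0; [lra|apply ex_RInt_green_source; lra|].
  intros s Hs. apply Rmult_le_pos; [apply (green_bounds n r s); lra|apply g_ge0; lra].
Qed.

Lemma integral_solution_nonincreasing (t s : R) : 0 < t -> t <= s -> v s <= v t.
Proof.
  intros Ht Hts. destruct integral_solution_flux as [B [LB DV]].
  assert (Bge0 : forall r, 0 < r -> 0 <= B r).
  { intros r Hr. apply (lim_at_0_ge _ _ _ r Hr (LB r Hr)). intros e He.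
    apply RInt_ge_0; [lra| |].
    { apply ex_RInt_continuous_pos; [lra|lra|apply continuous_Rpower_mul_source]. }
    intros x Hx. apply Rmult_le_pos; [left; apply Rpower_pos|apply g_ge0; lra]. }
  destruct (MVT_gen v t s (fun r => - Rpower r (1 - n) * B r)) as [c [Hc Hm]].
  - intros x Hx. rewrite Rmin_left in Hx by lra. apply DV; lra.
  - intros x Hx. rewrite Rmin_left in Hx by lra. apply continuity_pt_filterlim.
    destruct v_sol as [_ [Hcont _]]. apply Hcont; lra.
  - rewrite Rmin_left, Rmax_right in Hc by lra.
    pose proof (Rpower_pos c (1 - n)). pose proof (Bge0 c ltac:(lra)).
    assert (0 <= Rpower c (1 - n) * B c * (s - t))
      by (apply Rmult_le_pos; [apply Rmult_le_pos|]; lra).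
    lra.
Qed.

Lemma integral_solution_drop_bound (a1 a2 b1 b2 R0 r : R) :
  -1 < b1 -> -1 < b2 -> 0 <= a1 -> 0 <= a2 ->
  (forall s, 0 < s <= R0 -> s * g s <= a1 * Rpower s b1 + a2 * Rpower s b2) ->
  0 < r <= R0 ->
  zeta - v r <= (a1 * Rpower R0 (b1 + 1) / (b1 + 1) + a2 * Rpower R0 (b2 + 1) / (b2 + 1)) / (n - 2).
Proof.
  intros Hb1 Hb2 Ha1 Ha2 Hgb Hr. destruct v_sol as [_ [_ Hw]].
  apply (lim_at_0_le _ _ _ r (proj1 Hr) (Hw r (proj1 Hr))). intros e He.
  replace ((a1 * Rpower R0 (b1 + 1) / (b1 + 1) + a2 * Rpower R0 (b2 + 1) / (b2 + 1)) / (n - 2))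
    with ((a1 / (n - 2)) * Rpower R0 (b1 + 1) / (b1 + 1)
          + (a2 / (n - 2)) * Rpower R0 (b2 + 1) / (b2 + 1)) by (field; lra).
  apply RInt_le_two_powers; try lra.
  - apply Rdiv_le_0_compat; lra.
  - apply Rdiv_le_0_compat; lra.
  - apply ex_RInt_green_source; lra.
  - intros s Hs. destruct (green_bounds n r s Hn ltac:(lra)) as [k1 k2].
    pose proof (g_ge0 s ltac:(lra)). pose proof (Hgb s ltac:(lra)).
    apply Rle_trans with (s / (n - 2) * g s); [apply Rmult_le_compat_r; assumption|].
    replace (s / (n - 2) * g s) with ((s * g s) / (n - 2)) by (field; lra).
    replace (a1 / (n - 2) * Rpower s b1 + a2 / (n - 2) * Rpower s b2) with
      ((a1 * Rpower s b1 + a2 * Rpower s b2) / (n - 2)) by (field; lra).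
    unfold Rdiv. apply Rmult_le_compat_r; [left; apply Rinv_0_lt_compat; lra|assumption].
Qed.

End NonnegativeSource.

End IntegralEquation.

(** * Comparison with the model problem near the origin *)

Lemma abs_RInt_le_RInt (h1 h2 : R -> R) (e r : R) : e <= r -> ex_RInt h1 e r -> ex_RInt h2 e r ->
  (forall s, e < s < r -> Rabs (h1 s) <= h2 s) -> Rabs (RInt h1 e r) <= RInt h2 e r.
Proof.
  intros Her E1 E2 H. apply Rle_trans with (RInt (fun t => Rabs (h1 t)) e r).
  - apply abs_RInt_le; assumption.
  - apply RInt_le; try assumption. apply (ex_RInt_norm h1); assumption.
Qed.

Lemma RInt_exp_weight_le (L a e r : R) : 0 < L -> -2 < a -> 0 < e -> e <= r ->
  RInt (fun s => Rpower s (1 + a) * exp (L * Rpower s (2 + a))) e r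
  <= exp (L * Rpower r (2 + a)) / (L * (2 + a)).
Proof.
  intros HL Ha He Her.
  assert (H : is_RInt (fun s => Rpower s (1 + a) * exp (L * Rpower s (2 + a))) e r
     (minus (exp (L * Rpower r (2 + a)) / (L * (2 + a)))
            (exp (L * Rpower e (2 + a)) / (L * (2 + a))))).
  { apply (is_RInt_derive (fun s => exp (L * Rpower s (2 + a)) / (L * (2 + a)))).
    - intros x Hx. rewrite Rmin_left in Hx by lra.
      unfold Rpower. auto_derive; [lra|].
      replace ((2 + a) * ln x) with (ln x + (1 + a) * ln x) by ring.
      rewrite exp_plus, exp_ln by lra. field. lra.
    - intros x Hx. rewrite Rmin_left in Hx by lra. solve_continuity. }
  rewrite (is_RInt_unique _ _ _ _ H). unfold minus, plus, opp. simpl.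
  assert (0 < exp (L * Rpower e (2 + a)) / (L * (2 + a)))
    by (apply Rdiv_lt_0_compat; [apply exp_pos|apply Rmult_lt_0_compat; lra]).
  lra.
Qed.

(** If every bound [d <= M E] improves to [d <= (eta + M/2) E], then [d <= 2 eta E]: apply the
    improvement to the best constant [M] and use [M <= eta + M/2]. *)
Lemma le_of_bound_improvement (d E : R -> R) (eta M0 R0 : R) :
  0 < R0 -> (forall r, 0 < r <= R0 -> 0 < E r) -> (forall r, 0 < r <= R0 -> d r <= M0 * E r) ->
  (forall M, (forall r, 0 < r <= R0 -> d r <= M * E r) ->
             forall r, 0 < r <= R0 -> d r <= (eta + M / 2) * E r) ->
  forall r, 0 < r <= R0 -> d r <= 2 * eta * E r.
Proof.
  intros HR HE H0 Hstep.
  set (Q := fun x => exists r, (0 < r <= R0) /\ x = d r / E r).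
  assert (Hdiv : forall M r, 0 < r <= R0 -> (d r / E r <= M <-> d r <= M * E r)).
  { intros M r Hr. specialize (HE r Hr). split; intros H.
    - apply (Rmult_le_compat_r (E r)) in H; [|lra].
      unfold Rdiv in H. rewrite Rmult_assoc, Rinv_l, Rmult_1_r in H; lra.
    - apply (Rmult_le_reg_r (E r)); [assumption|]. unfold Rdiv. rewrite Rmult_assoc, Rinv_l; lra. }
  assert (Hb : bound Q) by (exists M0; intros x [r [Hr ->]]; apply Hdiv, H0; assumption).
  assert (Hne : exists x, Q x) by (exists (d R0 / E R0); exists R0; split; [lra|reflexivity]).
  destruct (completeness Q Hb Hne) as [S [HS1 HS2]].
  assert (HdS : forall r, 0 < r <= R0 -> d r <= S * E r).
  { intros r Hr. apply Hdiv; [assumption|]. apply HS1. exists r. split; [assumption|reflexivity]. }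
  assert (HS3 : S <= eta + S / 2).
  { apply HS2. intros x [r [Hr ->]]. apply Hdiv; [assumption|]. apply Hstep; assumption. }
  intros r Hr. apply Rle_trans with (S * E r); [apply HdS, Hr|].
  specialize (HE r Hr). apply Rmult_le_compat_r; lra.
Qed.

Lemma model_weight_continuous (k0 alpha s : R) : 0 < s ->
  continuous (fun s => k0 * Rpower s alpha) s.
Proof. intros. solve_continuity. Qed.

Lemma model_source_ge0 (p k0 alpha : R) (w : R -> R) (s : R) : 0 < k0 -> 0 < s ->
  0 <= source p 0 (fun s => k0 * Rpower s alpha) (fun _ => 0) w s.
Proof.
  intros Hk0 Hs. unfold source. rewrite Rmult_0_l, Rplus_0_r.
  apply Rmult_le_pos; [|apply pospow_ge0]. apply Rmult_le_pos; [lra|left; apply Rpower_pos].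
Qed.

Section Comparison.

Variables (n p mu k0 alpha nu zeta R0 eps0 C1 : R) (Kf f v w : R -> R).
Hypotheses (Hn : 2 < n) (Hp : 1 < p) (Halpha : -2 < alpha) (Hnu : -2 < nu) (Hk0 : 0 < k0)
  (Hzeta : 0 < zeta) (HR0 : 0 < R0) (Heps0 : 0 <= eps0) (HC1 : 0 <= C1) (Hmu : 0 <= mu).
Hypothesis Kf_cont : forall s, 0 < s -> continuous Kf s.
Hypothesis f_cont : forall s, 0 < s -> continuous f s.
Hypothesis Kf_ge0 : forall s, 0 < s -> 0 <= Kf s.
Hypothesis f_ge0 : forall s, 0 < s -> 0 <= f s.
Hypothesis Kf_close : forall s, 0 < s <= R0 ->
  Rabs (Kf s - k0 * Rpower s alpha) <= eps0 * Rpower s alpha.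
Hypothesis f_small : forall s, 0 < s <= R0 -> mu * f s <= C1 * Rpower s nu.
Hypothesis v_sol : integral_solution n p mu Kf f zeta v.
Hypothesis w_sol : integral_solution n p 0 (fun s => k0 * Rpower s alpha) (fun _ => 0) zeta w.

Local Notation g1 := (source p mu Kf f v).
Local Notation g2 := (source p 0 (fun s => k0 * Rpower s alpha) (fun _ => 0) w).
Local Notation d := (fun s => Rabs (v s - w s)).

(** [L0] is the Lipschitz constant of [k0 x^p] on [(-oo, zeta]]. *)
Let L0 := k0 * p * Rpower zeta (p - 1).
Let eta0 := eps0 * Rpower zeta p * Rpower R0 (2 + alpha) / (2 + alpha)
            + C1 * Rpower R0 (2 + nu) / (2 + nu).
(** [kap] makes [L0 / (n - 2) * int_0^r s^(1+alpha) E(s) ds <= E r / 2]. *)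
Let kap := 2 * L0 / (n - 2) / (2 + alpha).
Let E := fun s => exp (kap * Rpower s (2 + alpha)).
Let X := exp (kap * Rpower R0 (2 + alpha)).

Lemma perturbed_source_ge0 (s : R) : 0 < s -> 0 <= g1 s.
Proof.
  intros Hs. unfold source.
  apply Rplus_le_le_0_compat; apply Rmult_le_pos; auto using pospow_ge0.
Qed.

Lemma perturbed_solution_le (r : R) : 0 < r -> v r <= zeta.
Proof.
  apply (integral_solution_le n p mu zeta Kf f v); auto. apply perturbed_source_ge0.
Qed.

Lemma model_solution_le (r : R) : 0 < r -> w r <= zeta.
Proof.
  apply (integral_solution_le n p 0 zeta (fun s => k0 * Rpower s alpha) (fun _ => 0) w); auto.
  - apply model_weight_continuous.
  - intros; apply continuous_const.
  - intros s Hs; apply model_source_ge0; assumption.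
Qed.

Lemma continuous_perturbed_source (s : R) : 0 < s -> continuous g1 s.
Proof. intros. destruct v_sol as [_ [Hv _]]. apply continuous_source; auto. Qed.

Lemma continuous_model_source (s : R) : 0 < s -> continuous g2 s.
Proof.
  intros. destruct w_sol as [_ [Hw _]].
  apply continuous_source; auto; [apply model_weight_continuous|apply continuous_const]; assumption.
Qed.

Lemma source_difference_bound (s : R) : 0 < s <= R0 ->
  s * Rabs (g1 s - g2 s) <= eps0 * Rpower zeta p * Rpower s (1 + alpha) + C1 * Rpower s (1 + nu)
                            + L0 * (Rpower s (1 + alpha) * d s).
Proof.
  intros Hs.
  assert (B1 : Rabs ((Kf s - k0 * Rpower s alpha) * pospow p (v s))
               <= eps0 * Rpower s alpha * Rpower zeta p).
  { rewrite Rabs_mult, (Rabs_pos_eq (pospow p (v s))) by apply pospow_ge0.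
    apply Rmult_le_compat; auto using Rabs_pos, pospow_ge0.
    apply pospow_le; [lra|apply perturbed_solution_le|]; lra. }
  assert (B2 : Rabs (k0 * Rpower s alpha * (pospow p (v s) - pospow p (w s)))
               <= k0 * Rpower s alpha * (p * Rpower zeta (p - 1) * d s)).
  { pose proof (Rpower_pos s alpha).
    rewrite Rabs_mult, Rabs_pos_eq by (apply Rmult_le_pos; lra).
    apply Rmult_le_compat_l; [apply Rmult_le_pos; lra|].
    apply pospow_lipschitz; try lra; [apply perturbed_solution_le|apply model_solution_le]; lra. }
  assert (B3 : Rabs (mu * f s) <= C1 * Rpower s nu).
  { rewrite Rabs_pos_eq; [apply f_small, Hs|]. apply Rmult_le_pos; [lra|apply f_ge0; lra]. }
  assert (T : Rabs (g1 s - g2 s) <= eps0 * Rpower s alpha * Rpower zeta p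
                + k0 * Rpower s alpha * (p * Rpower zeta (p - 1) * d s) + C1 * Rpower s nu).
  { replace (g1 s - g2 s) with ((Kf s - k0 * Rpower s alpha) * pospow p (v s)
                + k0 * Rpower s alpha * (pospow p (v s) - pospow p (w s)) + mu * f s)
      by (unfold source; ring).
    eapply Rle_trans; [apply Rabs_triang|]. apply Rplus_le_compat; [|exact B3].
    eapply Rle_trans; [apply Rabs_triang|]. apply Rplus_le_compat; assumption. }
  apply (Rmult_le_compat_l s) in T; [|lra].
  eapply Rle_trans; [exact T|]. rewrite <- !Rpower_plus_1 by lra. unfold L0. right. ring.
Qed.

Lemma RInt_source_difference_bound (e r : R) : 0 < e -> e <= r -> r <= R0 ->
  RInt (fun s => s * Rabs (g1 s - g2 s)) e r
  <= eta0 + L0 * RInt (fun s => Rpower s (1 + alpha) * d s) e r.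
Proof.
  intros He Her HrR. destruct v_sol as [_ [Hv _]]. destruct w_sol as [_ [Hw _]].
  set (h0 := fun s => eps0 * Rpower zeta p * Rpower s (1 + alpha) + C1 * Rpower s (1 + nu)).
  assert (E0 : ex_RInt h0 e r).
  { apply ex_RInt_continuous_pos; [lra|lra|]. intros s Hs. unfold h0. solve_continuity. }
  assert (E1 : ex_RInt (fun s => Rpower s (1 + alpha) * d s) e r).
  { apply ex_RInt_continuous_pos; [lra|lra|]. intros s Hs.
    specialize (Hv s Hs). specialize (Hw s Hs). solve_continuity. }
  apply Rle_trans with (RInt (fun s => 1 * h0 s + L0 * (Rpower s (1 + alpha) * d s)) e r).
  { apply RInt_le; try assumption.
    - apply ex_RInt_continuous_pos; [lra|lra|]. intros s Hs.
      pose proof (continuous_perturbed_source s Hs). pose proof (continuous_model_source s Hs).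
      solve_continuity.
    - apply (ex_RInt_plus (V := R_CompleteNormedModule) (fun s => 1 * h0 s));
        apply (ex_RInt_scal (V := R_CompleteNormedModule)); assumption.
    - intros s Hs. rewrite Rmult_1_l. apply source_difference_bound. lra. }
  rewrite RInt_lin_comb, Rmult_1_l by assumption. apply Rplus_le_compat_r.
  unfold eta0. replace (2 + alpha) with (1 + alpha + 1) by ring.
  replace (2 + nu) with (1 + nu + 1) by ring.
  apply RInt_le_two_powers; try (assumption || lra).
  - apply Rmult_le_pos; [assumption|left; apply Rpower_pos].
  - intros s _. unfold h0. lra.
Qed.

Lemma green_difference_bound (r e : R) : 0 < e -> e <= r -> r <= R0 ->
  Rabs (RInt (fun s => green n r s * g1 s) e r - RInt (fun s => green n r s * g2 s) e r)
  <= (eta0 + L0 * RInt (fun s => Rpower s (1 + alpha) * d s) e r) / (n - 2).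
Proof.
  intros He Her HrR.
  assert (E1 := ex_RInt_green_source n p mu zeta Kf f v Hp Kf_cont f_cont v_sol r e He ltac:(lra)).
  assert (E2 := ex_RInt_green_source n p 0 zeta _ _ w Hp (model_weight_continuous k0 alpha)
                  (fun s _ => continuous_const 0 s) w_sol r e He ltac:(lra)).
  replace (RInt (fun s => green n r s * g1 s) e r - RInt (fun s => green n r s * g2 s) e r)
    with (1 * RInt (fun s => green n r s * g1 s) e r
          + (-1) * RInt (fun s => green n r s * g2 s) e r)
    by ring.
  rewrite <- RInt_lin_comb by assumption.
  eapply Rle_trans.
  - apply (abs_RInt_le_RInt _ (fun s => / (n - 2) * (s * Rabs (g1 s - g2 s)))); [assumption| | |].
    + apply (ex_RInt_plus (V := R_CompleteNormedModule) (fun s => 1 * (green n r s * g1 s)));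
        apply (ex_RInt_scal (V := R_CompleteNormedModule)); assumption.
    + apply (ex_RInt_scal (V := R_CompleteNormedModule)).
      apply ex_RInt_continuous_pos; [lra|lra|]. intros s Hs.
      pose proof (continuous_perturbed_source s Hs). pose proof (continuous_model_source s Hs).
      solve_continuity.
    + intros s Hs. destruct (green_bounds n r s Hn ltac:(lra)) as [k1 k2].
      replace (1 * (green n r s * g1 s) + -1 * (green n r s * g2 s))
        with (green n r s * (g1 s - g2 s)) by ring.
      rewrite Rabs_mult, (Rabs_pos_eq (green n r s)) by assumption.
      replace (/ (n - 2) * (s * Rabs (g1 s - g2 s))) with (s / (n - 2) * Rabs (g1 s - g2 s))
        by (field; lra).
      apply Rmult_le_compat_r; [apply Rabs_pos|assumption].
  - rewrite RInt_scal_R.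
    + rewrite Rmult_comm. unfold Rdiv. apply Rmult_le_compat_r.
      * left; apply Rinv_0_lt_compat; lra.
      * apply RInt_source_difference_bound; assumption.
    + apply ex_RInt_continuous_pos; [lra|lra|]. intros s Hs.
      pose proof (continuous_perturbed_source s Hs). pose proof (continuous_model_source s Hs).
      solve_continuity.
Qed.

Lemma comparison_L0_pos : 0 < L0.
Proof. unfold L0. pose proof (Rpower_pos zeta (p - 1)). apply Rmult_lt_0_compat; nra. Qed.

Lemma comparison_kap_pos : 0 < kap.
Proof.
  pose proof comparison_L0_pos. unfold kap.
  apply Rdiv_lt_0_compat; [apply Rdiv_lt_0_compat|]; lra.
Qed.

Lemma comparison_eta0_ge0 : 0 <= eta0.
Proof.
  unfold eta0. pose proof (Rpower_pos zeta p). pose proof (Rpower_pos R0 (2 + alpha)).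
  pose proof (Rpower_pos R0 (2 + nu)).
  apply Rplus_le_le_0_compat; apply Rdiv_le_0_compat; try lra; repeat apply Rmult_le_pos; lra.
Qed.

Lemma comparison_weight_ge1 (s : R) : 1 <= E s.
Proof.
  pose proof comparison_kap_pos. pose proof (Rpower_pos s (2 + alpha)).
  pose proof (exp_ineq1_le (kap * Rpower s (2 + alpha))). unfold E. nra.
Qed.

Lemma comparison_weight_le_X (s : R) : 0 < s <= R0 -> E s <= X.
Proof.
  intros Hs. pose proof comparison_kap_pos. unfold E, X.
  assert (Hle : kap * Rpower s (2 + alpha) <= kap * Rpower R0 (2 + alpha))
    by (apply Rmult_le_compat_l; [lra|apply Rle_Rpower_l; lra]).
  destruct Hle as [Hlt|Heq]; [left; apply exp_increasing, Hlt|rewrite Heq; lra].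
Qed.

Lemma continuous_comparison_weight (s : R) : 0 < s -> continuous E s.
Proof. intros. unfold E. solve_continuity. Qed.

Lemma comparison_bootstrap_step (M : R) :
  (forall s, 0 < s <= R0 -> d s <= M * E s) ->
  forall r, 0 < r <= R0 -> d r <= (eta0 / (n - 2) + M / 2) * E r.
Proof.
  intros HM r Hr.
  pose proof comparison_L0_pos as HL0. pose proof comparison_kap_pos as Hkap.
  assert (HM0 : 0 <= M).
  { pose proof (Rabs_pos (v r - w r)). pose proof (comparison_weight_ge1 r). specialize (HM r Hr).
    simpl in HM. nra. }
  destruct v_sol as [_ [Hv Lv]]. destruct w_sol as [_ [Hw Lw]].
  assert (Hlim := lim_at_0_lin _ _ _ _ 1 (-1) 0 (Lv r (proj1 Hr)) (Lw r (proj1 Hr))).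
  replace (Rabs (v r - w r)) with (Rabs (1 * (zeta - v r) + -1 * (zeta - w r) + 0))
    by (rewrite Rabs_minus_sym; f_equal; ring).
  apply (lim_at_0_abs_le _ _ _ r (proj1 Hr) Hlim). intros e He.
  replace (1 * RInt (fun s => green n r s * g1 s) e r
           + -1 * RInt (fun s => green n r s * g2 s) e r + 0)
    with (RInt (fun s => green n r s * g1 s) e r - RInt (fun s => green n r s * g2 s) e r) by ring.
  eapply Rle_trans; [apply green_difference_bound; lra|].
  assert (I1 : RInt (fun s => Rpower s (1 + alpha) * d s) e r <= M * (E r / (kap * (2 + alpha)))).
  { apply Rle_trans with (RInt (fun s => M * (Rpower s (1 + alpha) * E s)) e r).
    - apply RInt_le; [lra| | |].
      + apply ex_RInt_continuous_pos; [lra|lra|]. intros s Hs.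
        specialize (Hv s Hs). specialize (Hw s Hs). solve_continuity.
      + apply ex_RInt_continuous_pos; [lra|lra|]. intros s Hs.
        pose proof (continuous_comparison_weight s Hs). solve_continuity.
      + intros s Hs. rewrite (Rmult_comm M), Rmult_assoc.
        apply Rmult_le_compat_l; [left; apply Rpower_pos|]. rewrite Rmult_comm. apply HM. lra.
    - rewrite RInt_scal_R.
      + apply Rmult_le_compat_l; [assumption|]. apply RInt_exp_weight_le; lra.
      + apply ex_RInt_continuous_pos; [lra|lra|]. intros s Hs.
        pose proof (continuous_comparison_weight s Hs). solve_continuity. }
  apply Rle_trans with ((eta0 + L0 * (M * (E r / (kap * (2 + alpha))))) / (n - 2)).
  { unfold Rdiv at 1 3. apply Rmult_le_compat_r; [left; apply Rinv_0_lt_compat; lra|].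
    apply Rplus_le_compat_l, Rmult_le_compat_l; lra. }
  replace ((eta0 + L0 * (M * (E r / (kap * (2 + alpha))))) / (n - 2))
    with (eta0 / (n - 2) + M / 2 * E r) by (unfold kap; field; repeat split; lra).
  assert (0 <= eta0 / (n - 2)) by (apply Rdiv_le_0_compat; [apply comparison_eta0_ge0|lra]).
  pose proof (comparison_weight_ge1 r). nra.
Qed.

Lemma perturbed_solution_drop_bounded : exists D, forall s, 0 < s <= R0 -> zeta - v s <= D.
Proof.
  pose proof (Rpower_pos zeta p).
  eexists. intros s Hs.
  apply (integral_solution_drop_bound n p mu zeta Kf f v Hn Hp Kf_cont f_cont v_sol
           perturbed_source_ge0 ((k0 + eps0) * Rpower zeta p) C1 (1 + alpha) (1 + nu));
    auto; try lra.
  - apply Rmult_le_pos; lra.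
  - intros t Ht. unfold source. rewrite <- !Rpower_plus_1 by lra.
    assert (Kf t <= (k0 + eps0) * Rpower t alpha).
    { specialize (Kf_close t Ht). apply Rabs_le_between in Kf_close. lra. }
    assert (pospow p (v t) <= Rpower zeta p)
      by (apply pospow_le; [lra|apply perturbed_solution_le|]; lra).
    pose proof (f_small t Ht). pose proof (pospow_ge0 p (v t)).
    pose proof (Kf_ge0 t ltac:(lra)). pose proof (Rpower_pos t alpha).
    assert (Kf t * pospow p (v t) <= (k0 + eps0) * Rpower t alpha * Rpower zeta p)
      by (apply Rmult_le_compat; lra).
    nra.
  - exact Hs.
Qed.

Lemma model_solution_drop_bounded : exists D, forall s, 0 < s <= R0 -> zeta - w s <= D.
Proof.
  pose proof (Rpower_pos zeta p).
  eexists. intros s Hs.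
  apply (integral_solution_drop_bound n p 0 zeta (fun s => k0 * Rpower s alpha) (fun _ => 0) w
           Hn Hp (model_weight_continuous k0 alpha) (fun s _ => continuous_const 0 s) w_sol
           (fun t Ht => model_source_ge0 p k0 alpha w t Hk0 Ht)
           (k0 * Rpower zeta p) 0 (1 + alpha) 0);
    auto; try lra.
  - apply Rmult_le_pos; lra.
  - intros t Ht. unfold source. rewrite <- !Rpower_plus_1 by lra.
    assert (pospow p (w t) <= Rpower zeta p)
      by (apply pospow_le; [lra|apply model_solution_le|]; lra).
    pose proof (pospow_ge0 p (w t)). pose proof (Rpower_pos t alpha). pose proof (Rpower_pos t 0).
    assert (k0 * Rpower t alpha * pospow p (w t) <= k0 * Rpower t alpha * Rpower zeta p)
      by (apply Rmult_le_compat_l; [apply Rmult_le_pos|]; lra).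
    nra.
  - exact Hs.
Qed.

Lemma comparison_crude_bound : exists M0, forall s, 0 < s <= R0 -> d s <= M0 * E s.
Proof.
  destruct perturbed_solution_drop_bounded as [Dv HDv].
  destruct model_solution_drop_bounded as [Dw HDw].
  exists (Rmax 0 (Dv + Dw)). intros s Hs.
  specialize (HDv s Hs). specialize (HDw s Hs).
  assert (v s <= zeta) by (apply perturbed_solution_le; lra).
  assert (w s <= zeta) by (apply model_solution_le; lra).
  pose proof (comparison_weight_ge1 s).
  pose proof (Rmax_l 0 (Dv + Dw)). pose proof (Rmax_r 0 (Dv + Dw)).
  assert (Rabs (v s - w s) <= Dv + Dw) by (apply Rabs_le; lra).
  nra.
Qed.

Lemma comparison_values (r : R) : 0 < r <= R0 -> Rabs (v r - w r) <= 2 * (eta0 / (n - 2)) * X.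
Proof.
  intros Hr. destruct comparison_crude_bound as [M0 HM0].
  assert (H := le_of_bound_improvement d E (eta0 / (n - 2)) M0 R0 HR0
                 (fun s _ => Rlt_le_trans _ _ _ Rlt_0_1 (comparison_weight_ge1 s)) HM0
                 comparison_bootstrap_step r Hr).
  eapply Rle_trans; [exact H|]. apply Rmult_le_compat_l; [|apply comparison_weight_le_X, Hr].
  pose proof comparison_eta0_ge0. apply Rmult_le_pos; [lra|apply Rdiv_le_0_compat; lra].
Qed.

Lemma RInt_weighted_difference_le (e : R) : 0 < e < R0 ->
  RInt (fun s => Rpower s (1 + alpha) * d s) e R0
  <= Rpower R0 (2 + alpha) / (2 + alpha) * (2 * (eta0 / (n - 2)) * X).
Proof.
  intros He. rewrite Rmult_comm.
  apply Rle_trans with (RInt (fun s => (2 * (eta0 / (n - 2)) * X) * Rpower s (1 + alpha)) e R0).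
  - destruct v_sol as [_ [Hv _]]. destruct w_sol as [_ [Hw _]].
    apply RInt_le; [lra| | |].
    + apply ex_RInt_continuous_pos; [lra|lra|]. intros s Hs.
      specialize (Hv s Hs). specialize (Hw s Hs). solve_continuity.
    + apply ex_RInt_continuous_pos; [lra|lra|]. intros s Hs. solve_continuity.
    + intros s Hs. rewrite (Rmult_comm (2 * (eta0 / (n - 2)) * X)).
      apply Rmult_le_compat_l; [left; apply Rpower_pos|]. apply comparison_values. lra.
  - rewrite RInt_scal_R.
    + apply Rmult_le_compat_l.
      * pose proof comparison_eta0_ge0. pose proof (exp_pos (kap * Rpower R0 (2 + alpha))).
        unfold X.
        apply Rmult_le_pos; [apply Rmult_le_pos; [lra|apply Rdiv_le_0_compat]|]; lra.
      * replace (2 + alpha) with (1 + alpha + 1) by ring. apply RInt_Rpower_le; lra.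
    + apply ex_RInt_continuous_pos; [lra|lra|]. intros s Hs. solve_continuity.
Qed.

Lemma comparison_masses (B1 B2 : R) :
  lim_at_0 (fun e => RInt (fun s => Rpower s (n - 1) * g1 s) e R0) B1 ->
  lim_at_0 (fun e => RInt (fun s => Rpower s (n - 1) * g2 s) e R0) B2 ->
  Rabs (B1 - B2) <= Rpower R0 (n - 2)
                    * (eta0 + L0 * (Rpower R0 (2 + alpha) / (2 + alpha))
                              * (2 * (eta0 / (n - 2)) * X)).
Proof.
  intros HB1 HB2.
  replace (B1 - B2) with (1 * B1 + -1 * B2 + 0) by ring.
  apply (lim_at_0_abs_le _ _ _ R0 HR0 (lim_at_0_lin _ _ _ _ 1 (-1) 0 HB1 HB2)). intros e He.
  assert (Eg : forall g, (forall s, 0 < s -> continuous g s) ->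
                 ex_RInt (fun s => Rpower s (n - 1) * g s) e R0).
  { intros g Hg. apply ex_RInt_continuous_pos; [lra|lra|]. intros s Hs.
    specialize (Hg s Hs). solve_continuity. }
  assert (E1 := Eg _ continuous_perturbed_source). assert (E2 := Eg _ continuous_model_source).
  rewrite Rplus_0_r, <- RInt_lin_comb by assumption.
  assert (Ed : ex_RInt (fun s => s * Rabs (g1 s - g2 s)) e R0).
  { apply ex_RInt_continuous_pos; [lra|lra|]. intros s Hs.
    pose proof (continuous_perturbed_source s Hs). pose proof (continuous_model_source s Hs).
    solve_continuity. }
  eapply Rle_trans.
  { apply (abs_RInt_le_RInt _ (fun s => Rpower R0 (n - 2) * (s * Rabs (g1 s - g2 s)))); [lra| | |].
    - apply (ex_RInt_plus (V := R_CompleteNormedModule) (fun s => 1 * (Rpower s (n - 1) * g1 s)));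
        apply (ex_RInt_scal (V := R_CompleteNormedModule)); assumption.
    - apply (ex_RInt_scal (V := R_CompleteNormedModule)); assumption.
    - intros s Hs.
      replace (1 * (Rpower s (n - 1) * g1 s) + -1 * (Rpower s (n - 1) * g2 s))
        with (Rpower s (n - 1) * (g1 s - g2 s)) by ring.
      rewrite Rabs_mult, (Rabs_pos_eq (Rpower s (n - 1))) by (left; apply Rpower_pos).
      replace (n - 1) with (1 + (n - 2)) by ring. rewrite <- Rpower_plus_1 by lra.
      rewrite (Rmult_comm s), !Rmult_assoc. apply Rmult_le_compat_r.
      + apply Rmult_le_pos; [lra|apply Rabs_pos].
      + apply Rle_Rpower_l; lra. }
  rewrite RInt_scal_R by assumption.
  apply Rmult_le_compat_l; [left; apply Rpower_pos|].
  eapply Rle_trans; [apply RInt_source_difference_bound; lra|].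
  rewrite Rmult_assoc. apply Rplus_le_compat_l.
  apply Rmult_le_compat_l; [left; apply comparison_L0_pos|].
  apply RInt_weighted_difference_le; assumption.
Qed.

End Comparison.

(** * The model problem [w'' + (n-1)/r w' + k0 r^alpha max{w,0}^p = 0] *)

Section ModelProblem.

Variables (n p k0 alpha : R).
Hypotheses (Hn : 2 < n) (Hp : 1 < p) (Halpha : -2 < alpha) (Hk0 : 0 < k0).

Local Notation model_solution :=
  (integral_solution n p 0 (fun s => k0 * Rpower s alpha) (fun _ => 0)).
Local Notation model_source := (source p 0 (fun s => k0 * Rpower s alpha) (fun _ => 0)).

Lemma model_solution_unique (zeta : R) (w1 w2 : R -> R) : 0 < zeta ->
  model_solution zeta w1 -> model_solution zeta w2 -> forall r, 0 < r -> w1 r = w2 r.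
Proof.
  intros Hz W1 W2 r Hr.
  assert (H := comparison_values n p 0 k0 alpha 0 zeta r 0 0 _ (fun _ => 0) w1 w2
                 Hn Hp Halpha ltac:(lra) Hk0 Hz Hr (Rle_refl 0) (Rle_refl 0) (Rle_refl 0)
                 (model_weight_continuous k0 alpha) (fun s _ => continuous_const 0 s)
                 (fun s Hs => Rlt_le _ _ (Rmult_lt_0_compat _ _ Hk0 (Rpower_pos s alpha)))
                 (fun s _ => Rle_refl 0)
                 ltac:(intros; rewrite Rminus_diag, Rabs_R0; lra)
                 ltac:(intros; lra) W1 W2 r ltac:(lra)).
  replace (2 * ((0 * Rpower zeta p * Rpower r (2 + alpha) / (2 + alpha)
                + 0 * Rpower r (2 + 0) / (2 + 0)) / (n - 2)))
    with 0 in H by (field; lra).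
  rewrite Rmult_0_l in H. pose proof (Rabs_pos (w1 r - w2 r)).
  assert (Habs : Rabs (w1 r - w2 r) = 0) by lra. apply Rabs_eq_0 in Habs. lra.
Qed.

Lemma RInt_comp_scal (h : R -> R) (lam a b : R) : ex_RInt h (lam * a) (lam * b) ->
  RInt (fun s => lam * h (lam * s)) a b = RInt h (lam * a) (lam * b).
Proof.
  intros E. apply is_RInt_unique.
  apply (is_RInt_ext (V := R_NormedModule) (fun y => scal lam (h (lam * y + 0)))).
  { intros. rewrite Rplus_0_r. reflexivity. }
  apply (is_RInt_comp_lin (V := R_NormedModule) h lam 0 a b).
  rewrite !Rplus_0_r. apply (RInt_correct (V := R_CompleteNormedModule)). assumption.
Qed.

Lemma green_scal (lam t s : R) : 0 < lam -> 0 < t -> 0 < s ->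
  green n (lam * t) (lam * s) = lam * green n t s.
Proof.
  intros. unfold green. rewrite <- !Rpower_mult_distr by assumption.
  assert (HL := Rpower_mul_1_minus lam (2 - n) H).
  replace (1 - (2 - n)) with (n - 1) in HL by ring.
  set (L2 := Rpower lam (2 - n)) in *. set (L1 := Rpower lam (n - 1)) in *.
  rewrite <- HL. field. lra.
Qed.

(** [lam := zeta^(-1/theta)] is the scaling under which the model problem is invariant. *)
Lemma scaling_exponent (zeta : R) : 0 < zeta ->
  Rpower (Rpower zeta (- / theta alpha p)) (2 + alpha) = / Rpower zeta (p - 1).
Proof.
  intros. rewrite Rpower_mult. unfold theta.
  replace (- / ((2 + alpha) / (p - 1)) * (2 + alpha)) with (- (p - 1)) by (field; lra).
  apply Rpower_Ropp.
Qed.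

Lemma green_model_source_scale (zeta lam : R) (w : R -> R) (t s : R) :
  0 < zeta -> 0 < lam -> 0 < t -> 0 < s -> Rpower lam (2 + alpha) = / Rpower zeta (p - 1) ->
  / zeta * (lam * (green n (lam * t) (lam * s) * model_source w (lam * s)))
  = green n t s * model_source (fun t => / zeta * w (lam * t)) s.
Proof.
  intros Hz Hlam Ht Hs HL. unfold source. rewrite green_scal by assumption.
  rewrite <- (Rpower_mult_distr lam s) by assumption.
  replace (pospow p (w (lam * s))) with (Rpower zeta p * pospow p (/ zeta * w (lam * s)))
    by (rewrite <- pospow_scale by lra; f_equal; field; lra).
  replace (Rpower zeta p) with (zeta * Rpower zeta (p - 1))
    by (replace p with (1 + (p - 1)) at 2 by ring; apply Rpower_plus_1, Hz).
  replace (Rpower lam alpha) with (/ (lam * lam) * / Rpower zeta (p - 1)).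
  2: { rewrite <- HL. replace (2 + alpha) with (1 + (1 + alpha)) by ring.
       rewrite <- !Rpower_plus_1 by assumption.
       assert (0 < Rpower lam alpha) by apply Rpower_pos. field; repeat split; lra. }
  assert (0 < Rpower zeta (p - 1)) by apply Rpower_pos.
  field. repeat split; lra.
Qed.

Lemma model_solution_scale (zeta : R) (w : R -> R) : 0 < zeta -> model_solution zeta w ->
  model_solution 1 (fun t => / zeta * w (Rpower zeta (- / theta alpha p) * t)).
Proof.
  intros Hz [Wl [Wc Wi]].
  set (lam := Rpower zeta (- / theta alpha p)).
  assert (Hlam : 0 < lam) by apply Rpower_pos.
  assert (HL := scaling_exponent zeta Hz). fold lam in HL.
  assert (cw : forall t, 0 < t -> continuous (fun t => / zeta * w (lam * t)) t).
  { intros t Ht. apply continuous_Rmult; [apply continuous_const|].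
    apply (continuous_comp (fun t => lam * t) w); [solve_continuity|apply Wc; nra]. }
  split; [|split; [exact cw|]].
  - replace 1 with (/ zeta * zeta) by (field; lra).
    apply (lim_at_0_ext (fun t => / zeta * w (lam * t) + 0 * w (lam * t) + 0) _ _ 1 Rlt_0_1);
      [intros; ring|].
    replace (/ zeta * zeta) with (/ zeta * zeta + 0 * zeta + 0) by ring.
    assert (H1 : lim_at_0 (fun t => w (lam * t)) zeta)
      by (eapply filterlim_comp; [apply filterlim_scal_at_right_0, Hlam|exact Wl]).
    apply lim_at_0_lin; exact H1.
  - intros t Ht.
    set (Hf := fun s => green n (lam * t) s * model_source w s).
    assert (cHf : forall s, 0 < s -> continuous Hf s).
    { intros s Hs. unfold Hf. pose proof (continuous_green n (lam * t) s Hs).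
      assert (continuous (model_source w) s)
        by (apply continuous_source; auto;
            [apply (model_weight_continuous k0 alpha)|apply continuous_const]; auto).
      solve_continuity. }
    assert (L2 : lim_at_0 (fun e => RInt Hf (lam * e) (lam * t)) (zeta - w (lam * t))).
    { eapply (filterlim_comp _ _ _ (fun e => lam * e) (fun e => RInt Hf e (lam * t)));
        [apply filterlim_scal_at_right_0, Hlam|apply Wi; nra]. }
    replace (1 - / zeta * w (lam * t))
      with (/ zeta * (zeta - w (lam * t)) + 0 * (zeta - w (lam * t)) + 0) by (field; lra).
    apply (lim_at_0_ext (fun e => / zeta * RInt Hf (lam * e) (lam * t)
                                  + 0 * RInt Hf (lam * e) (lam * t) + 0) _ _ t Ht);
      [|apply lim_at_0_lin; exact L2].
    intros e He.
    rewrite <- RInt_comp_scal by (apply ex_RInt_continuous_pos; [nra|nra|exact cHf]).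
    rewrite <- RInt_scal_R.
    2: { apply ex_RInt_continuous_pos; [lra|lra|]. intros s Hs.
         apply (continuous_comp (fun s => lam * s) (fun s => lam * Hf s)); [solve_continuity|].
         apply continuous_Rmult; [apply continuous_const|apply cHf; nra]. }
    rewrite Rmult_0_l, !Rplus_0_r. apply RInt_ext_R. intros s Hs.
    rewrite Rmin_left, Rmax_right in Hs by lra.
    apply green_model_source_scale; lra.
Qed.

Section Pohozaev.

Variables (v B : R -> R).
Hypothesis v_sol : model_solution 1 v.
Hypothesis B_lim : forall r, 0 < r ->
  lim_at_0 (fun e => RInt (fun s => Rpower s (n - 1) * model_source v s) e r) (B r).
Hypothesis v_deriv : forall r, 0 < r -> is_derive v r (- Rpower r (1 - n) * B r).

Lemma model_solution_le_1 (r : R) : 0 < r -> v r <= 1.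
Proof.
  apply (integral_solution_le n p 0 1 (fun s => k0 * Rpower s alpha) (fun _ => 0) v Hn Hp); auto.
  - apply (model_weight_continuous k0 alpha).
  - intros; apply continuous_const.
  - intros s Hs; apply model_source_ge0; assumption.
Qed.

Lemma mass_derive (r : R) : 0 < r -> is_derive B r (Rpower r (n - 1) * model_source v r).
Proof.
  apply (is_derive_improper_RInt (fun s => Rpower s (n - 1) * model_source v s)); [|exact B_lim].
  apply (continuous_Rpower_mul_source n p 0 1 (fun s => k0 * Rpower s alpha) (fun _ => 0) v Hp);
    auto.
  - apply (model_weight_continuous k0 alpha).
  - intros; apply continuous_const.
Qed.

Lemma mass_bounds (r : R) : 0 < r -> 0 <= B r <= k0 / (n + alpha) * Rpower r (n + alpha).
Proof.
  intros Hr.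
  assert (Eg : forall e, 0 < e -> ex_RInt (fun s => Rpower s (n - 1) * model_source v s) e r).
  { intros e He. apply ex_RInt_continuous_pos; [lra|lra|].
    apply (continuous_Rpower_mul_source n p 0 1 (fun s => k0 * Rpower s alpha) (fun _ => 0) v Hp);
    auto.
    - apply (model_weight_continuous k0 alpha).
    - intros; apply continuous_const. }
  split.
  - apply (lim_at_0_ge _ _ _ r Hr (B_lim r Hr)). intros e He.
    apply RInt_ge_0; [lra|apply Eg; lra|]. intros x Hx.
    apply Rmult_le_pos; [left; apply Rpower_pos|apply model_source_ge0; lra].
  - apply (lim_at_0_le _ _ _ r Hr (B_lim r Hr)). intros e He.
    replace (k0 / (n + alpha) * Rpower r (n + alpha))
      with (k0 * Rpower r (n - 1 + alpha + 1) / (n - 1 + alpha + 1)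
            + 0 * Rpower r (0 + 1) / (0 + 1))
      by (replace (n - 1 + alpha + 1) with (n + alpha) by ring; field; lra).
    apply RInt_le_two_powers; try lra; [apply Eg; lra|].
    intros s Hs. unfold source. rewrite !Rmult_0_l, !Rplus_0_r, Rpower_plus.
    assert (pospow p (v s) <= 1) by (apply pospow_le_1; [lra|apply model_solution_le_1; lra]).
    pose proof (Rpower_pos s (n - 1)). pose proof (Rpower_pos s alpha).
    pose proof (pospow_ge0 p (v s)).
    assert (0 <= Rpower s (n - 1) * (k0 * Rpower s alpha))
      by (apply Rmult_le_pos; [|apply Rmult_le_pos]; lra).
    nra.
Qed.

Definition pohozaev (r : R) : R :=
  / 2 * (Rpower r (2 - n) * (B r * B r))
  + k0 / (p + 1) * (Rpower r (n + alpha) * pospow (p + 1) (v r))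
  - (n - 2) / 2 * (v r * B r).

Lemma is_derive_pohozaev (r : R) : 0 < r ->
  is_derive pohozaev r (k0 * (Rpower r (n - 1) * Rpower r alpha) * pospow (p + 1) (v r)
                        * ((n + alpha) / (p + 1) - (n - 2) / 2)).
Proof.
  intros Hr. eapply is_derive_eq.
  { apply is_derive_Rminus; [apply is_derive_Rplus|]; apply is_derive_Rscal.
    - apply is_derive_Rmult; [apply is_derive_Rpower, Hr|].
      apply is_derive_Rmult; apply mass_derive, Hr.
    - apply is_derive_Rmult; [apply is_derive_Rpower, Hr|].
      apply (is_derive_Rcomp (pospow (p + 1)) v); [apply is_derive_pospow; lra|apply v_deriv, Hr].
    - apply is_derive_Rmult; [apply v_deriv, Hr|apply mass_derive, Hr]. }
  unfold source.
  replace (2 - n - 1) with (1 - n) by ring. replace (p + 1 - 1) with p by ring.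
  replace (Rpower r (n + alpha - 1)) with (Rpower r (n - 1) * Rpower r alpha)
    by (rewrite <- Rpower_plus; f_equal; ring).
  replace (Rpower r (n + alpha)) with (r * (Rpower r (n - 1) * Rpower r alpha))
    by (rewrite <- Rpower_plus, Rpower_plus_1 by exact Hr; f_equal; ring).
  rewrite <- (mul_pospow p (v r)).
  assert (HQ : 0 < Rpower r (n - 1)) by apply Rpower_pos.
  replace (Rpower r (2 - n)) with (r / Rpower r (n - 1)).
  2: { assert (H := Rpower_mul_1_minus r (2 - n) Hr).
       replace (1 - (2 - n)) with (n - 1) in H by ring.
       apply (Rmult_eq_reg_r (Rpower r (n - 1))); [|lra]. rewrite H. field. lra. }
  replace (Rpower r (1 - n)) with (/ Rpower r (n - 1))
    by (replace (1 - n) with (- (n - 1)) by ring; rewrite Rpower_Ropp; reflexivity).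
  field. lra.
Qed.

Hypothesis Hcrit : n + 2 + 2 * alpha < (n - 2) * p.

Lemma pohozaev_coefficient_neg : (n + alpha) / (p + 1) - (n - 2) / 2 < 0.
Proof.
  apply (Rmult_lt_reg_r (2 * (p + 1))); [lra|]. rewrite Rmult_0_l. field_simplify; lra.
Qed.

Lemma pohozaev_derive_le0 (r : R) : 0 < r ->
  k0 * (Rpower r (n - 1) * Rpower r alpha) * pospow (p + 1) (v r)
  * ((n + alpha) / (p + 1) - (n - 2) / 2) <= 0.
Proof.
  intros Hr. pose proof pohozaev_coefficient_neg. pose proof (Rpower_pos r (n - 1)).
  pose proof (Rpower_pos r alpha). pose proof (pospow_ge0 (p + 1) (v r)).
  assert (0 <= k0 * (Rpower r (n - 1) * Rpower r alpha) * pospow (p + 1) (v r))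
    by (apply Rmult_le_pos; [apply Rmult_le_pos; [lra|apply Rmult_le_pos]|]; lra).
  nra.
Qed.

Lemma pohozaev_nonincreasing (e r : R) : 0 < e -> e <= r -> pohozaev r <= pohozaev e.
Proof.
  intros He Her.
  destruct (MVT_gen pohozaev e r (fun r => k0 * (Rpower r (n - 1) * Rpower r alpha)
                                          * pospow (p + 1) (v r)
                                          * ((n + alpha) / (p + 1) - (n - 2) / 2)))
    as [c [Hc Hm]].
  - intros x Hx. rewrite Rmin_left in Hx by lra. apply is_derive_pohozaev. lra.
  - intros x Hx. rewrite Rmin_left in Hx by lra. apply continuity_pt_filterlim.
    apply (ex_derive_continuous pohozaev). eexists. apply is_derive_pohozaev. lra.
  - rewrite Rmin_left, Rmax_right in Hc by lra. pose proof (pohozaev_derive_le0 c ltac:(lra)). nra.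
Qed.

(** Since [B r = O(r^(n+alpha))] and [0 < v <= 1] near [0], every term of [pohozaev]
    vanishes at [0]. *)
Lemma pohozaev_lim_0 : lim_at_0 pohozaev 0.
Proof.
  destruct v_sol as [Wl _].
  destruct (lim_at_0_pos v 1 Rlt_0_1 Wl) as [dl [Hdl vpos]].
  set (b0 := k0 / (n + alpha)).
  assert (Hb0 : 0 < b0) by (unfold b0; apply Rdiv_lt_0_compat; lra).
  set (c1 := / 2 * (b0 * b0)). set (c2 := k0 / (p + 1) + (n - 2) / 2 * b0).
  assert (L := lim_at_0_lin _ _ _ _ c1 c2 0 (lim_at_0_Rpower (n + 2 + 2 * alpha) ltac:(lra))
                 (lim_at_0_Rpower (n + alpha) ltac:(lra))).
  replace (c1 * 0 + c2 * 0 + 0) with 0 in L by ring.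
  apply (lim_at_0_squeeze _
           (fun e => c1 * Rpower e (n + 2 + 2 * alpha) + c2 * Rpower e (n + alpha) + 0)
           dl Hdl); [|exact L].
  intros e He. specialize (vpos e He).
  assert (ve := model_solution_le_1 e (proj1 He)).
  destruct (mass_bounds e (proj1 He)) as [B1 B2]. fold b0 in B2.
  set (S := Rpower e (2 - n)) in *. set (T := Rpower e (n + alpha)) in *.
  assert (HS : 0 < S) by apply Rpower_pos. assert (HT : 0 < T) by apply Rpower_pos.
  assert (ST : S * T * T = Rpower e (n + 2 + 2 * alpha))
    by (unfold S, T; rewrite <- !Rpower_plus; f_equal; ring).
  rewrite <- ST.
  assert (H1 : 0 <= pospow (p + 1) (v e) <= 1)
    by (split; [apply pospow_ge0|apply pospow_le_1; lra]).
  assert (Q1 : 0 <= S * (B e * B e) <= S * T * T * (b0 * b0)).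
  { split; [apply Rmult_le_pos; nra|].
    replace (S * T * T * (b0 * b0)) with (S * ((b0 * T) * (b0 * T))) by ring.
    apply Rmult_le_compat_l; [lra|]. apply Rmult_le_compat; lra. }
  assert (Q2 : 0 <= T * pospow (p + 1) (v e) <= T) by (split; nra).
  assert (Q3 : 0 <= v e * B e <= b0 * T) by (split; nra).
  assert (k0 / (p + 1) > 0) by (apply Rdiv_lt_0_compat; lra).
  assert ((n - 2) / 2 > 0) by (apply Rdiv_lt_0_compat; lra).
  unfold pohozaev. fold S T. unfold c1, c2. apply Rabs_le. split; nra.
Qed.

Lemma pohozaev_le0 (r : R) : 0 < r -> pohozaev r <= 0.
Proof.
  intros Hr. apply (lim_at_0_ge _ _ _ r Hr pohozaev_lim_0). intros e He.
  apply pohozaev_nonincreasing; lra.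
Qed.

(** Where [v <= 0] the Pohozaev function is [>= 0]; but it is [< 0] as soon as it has
    strictly decreased somewhere, which happens near [0] where [v > 0]. *)
Lemma model_solution_pos_of_flux (r : R) : 0 < r -> 0 < v r.
Proof.
  intros Hr. destruct (Rlt_or_le 0 (v r)) as [|Hv]; [assumption|exfalso].
  destruct v_sol as [Wl _].
  destruct (lim_at_0_pos v 1 Rlt_0_1 Wl) as [dl [Hdl0 vpos]].
  destruct (Rlt_or_le r dl) as [Hrd|Hrd]; [pose proof (vpos r (conj Hr Hrd)); lra|].
  assert (Pr : 0 <= pohozaev r).
  { unfold pohozaev. rewrite (pospow_nonpos (p + 1) (v r)) by assumption.
    destruct (mass_bounds r Hr). pose proof (Rpower_pos r (2 - n)).
    assert (0 <= Rpower r (2 - n) * (B r * B r)) by (apply Rmult_le_pos; nra).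
    assert (v r * B r <= 0) by nra.
    assert (0 <= (n - 2) / 2) by (apply Rdiv_le_0_compat; lra). nra. }
  assert (Pdrop : pohozaev (dl / 2) < pohozaev (dl / 4)).
  { destruct (MVT_gen pohozaev (dl / 4) (dl / 2)
      (fun r => k0 * (Rpower r (n - 1) * Rpower r alpha) * pospow (p + 1) (v r)
                * ((n + alpha) / (p + 1) - (n - 2) / 2))) as [c [Hc Hm]].
    - intros x Hx. rewrite Rmin_left in Hx by lra. apply is_derive_pohozaev. lra.
    - intros x Hx. rewrite Rmin_left in Hx by lra. apply continuity_pt_filterlim.
      apply (ex_derive_continuous pohozaev). eexists. apply is_derive_pohozaev. lra.
    - rewrite Rmin_left, Rmax_right in Hc by lra.
      pose proof pohozaev_coefficient_neg. pose proof (Rpower_pos c (n - 1)).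
      pose proof (Rpower_pos c alpha). pose proof (vpos c ltac:(lra)).
      rewrite pospow_pos in Hm by lra. pose proof (Rpower_pos (v c) (p + 1)).
      assert (0 < k0 * (Rpower c (n - 1) * Rpower c alpha) * Rpower (v c) (p + 1))
        by (apply Rmult_lt_0_compat;
              [apply Rmult_lt_0_compat; [lra|apply Rmult_lt_0_compat]|]; lra).
      assert (0 < dl / 2 - dl / 4) by lra.
      assert (k0 * (Rpower c (n - 1) * Rpower c alpha) * Rpower (v c) (p + 1)
              * ((n + alpha) / (p + 1) - (n - 2) / 2) < 0) by nra.
      nra. }
  pose proof (pohozaev_le0 (dl / 4) ltac:(lra)).
  pose proof (pohozaev_nonincreasing (dl / 2) r ltac:(lra) ltac:(lra)).
  lra.
Qed.

End Pohozaev.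

Lemma model_solution_pos (v : R -> R) : n + 2 + 2 * alpha < (n - 2) * p ->
  model_solution 1 v -> forall r, 0 < r -> 0 < v r.
Proof.
  intros Hcrit W.
  destruct (integral_solution_flux n p 0 1 _ (fun _ => 0) v Hn Hp (model_weight_continuous k0 alpha)
              (fun s _ => continuous_const 0 s) W) as [B [LB DV]].
  apply (model_solution_pos_of_flux v B W LB DV Hcrit).
Qed.

End ModelProblem.

(** * Comparison at the scale [r ~ zeta^(-1/theta)] *)

Lemma K_close_near_0 (K : R -> R) (alpha k0 eps0 : R) : 0 < eps0 ->
  filterlim (fun r => K r / Rpower r alpha) (at_right 0) (locally k0) ->
  exists dK, 0 < dK /\
    forall s, 0 < s < dK -> Rabs (K s - k0 * Rpower s alpha) <= eps0 * Rpower s alpha.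
Proof.
  intros He HK. destruct (HK (ball k0 (mkposreal eps0 He)) (locally_ball _ _)) as [dK HdK].
  exists dK. split; [apply cond_pos|]. intros s Hs.
  assert (Hb : ball 0 dK s) by (change (Rabs (s - 0) < dK); rewrite Rminus_0_r, Rabs_pos_eq; lra).
  specialize (HdK s Hb ltac:(lra)). change (Rabs (K s / Rpower s alpha - k0) < eps0) in HdK.
  pose proof (Rpower_pos s alpha).
  replace (K s - k0 * Rpower s alpha) with (Rpower s alpha * (K s / Rpower s alpha - k0))
    by (field; lra).
  rewrite Rabs_mult, Rabs_pos_eq by lra. rewrite Rmult_comm. apply Rmult_le_compat_r; lra.
Qed.

Lemma forcing_bound_near_0 (f : R -> R) (mu nu : R) : 0 <= mu ->
  (exists C delta, 0 < delta /\ forall r, 0 < r < delta -> Rabs (f r) <= C * Rpower r nu) ->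
  exists C1 df, 0 <= C1 /\ 0 < df /\ forall s, 0 < s < df -> mu * f s <= C1 * Rpower s nu.
Proof.
  intros Hmu [C [df [Hdf HfC]]]. exists (mu * Rmax C 0), df.
  split; [apply Rmult_le_pos; [assumption|apply Rmax_r]|]. split; [assumption|].
  intros s Hs. pose proof (Rpower_pos s nu). specialize (HfC s Hs).
  rewrite Rmult_assoc. apply Rmult_le_compat_l; [assumption|].
  apply Rle_trans with (Rabs (f s)); [apply Rle_abs|].
  eapply Rle_trans; [exact HfC|]. apply Rmult_le_compat_r; [lra|apply Rmax_l].
Qed.

Section Asymptotics.

Variables (n p mu alpha k0 nu sigma : R) (K f : R -> R) (u ub : R -> R -> R).
Hypotheses (Hn : 2 < n) (Hp : 1 < p) (Hmu : 0 <= mu) (Halpha : -2 < alpha) (Hk0 : 0 < k0)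
  (Hnu : -2 < nu) (Hsigma : 0 < sigma).
Hypothesis K_cont : forall r, 0 < r -> continuous K r.
Hypothesis K_pos : forall r, 0 < r -> 0 < K r.
Hypothesis f_cont : forall r, 0 < r -> continuous f r.
Hypothesis f_ge0 : forall r, 0 < r -> 0 <= f r.
Hypothesis u_sol : forall zeta, 0 < zeta -> integral_solution n p mu K f zeta (fun r => u r zeta).
Hypothesis ub_sol : forall zeta, 0 < zeta ->
  integral_solution n p 0 (fun s => k0 * Rpower s alpha) (fun _ => 0) zeta (fun r => ub r zeta).

Let lam (zeta : R) : R := Rpower zeta (- / theta alpha p).
Let X0 : R := exp (2 * (k0 * p) / (n - 2) / (2 + alpha) * Rpower sigma (2 + alpha)).
Let Y0 : R := 1 + k0 * p * (Rpower sigma (2 + alpha) / (2 + alpha)) * (2 / (n - 2)) * X0.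
Let eta0 (eps0 C1 zeta : R) : R :=
  eps0 * Rpower zeta p * Rpower (sigma * lam zeta) (2 + alpha) / (2 + alpha)
  + C1 * Rpower (sigma * lam zeta) (2 + nu) / (2 + nu).

Lemma scaled_radius_power (zeta : R) : 0 < zeta ->
  Rpower (sigma * lam zeta) (2 + alpha) = Rpower sigma (2 + alpha) * / Rpower zeta (p - 1).
Proof.
  intros Hz. unfold lam. rewrite <- Rpower_mult_distr by (assumption || apply Rpower_pos).
  rewrite (scaling_exponent p alpha Hp Halpha zeta Hz). reflexivity.
Qed.

Lemma comparison_at_scale (zeta eps0 C1 : R) : 0 < zeta -> 0 <= eps0 -> 0 <= C1 ->
  (forall s, 0 < s <= sigma * lam zeta ->
     Rabs (K s - k0 * Rpower s alpha) <= eps0 * Rpower s alpha) ->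
  (forall s, 0 < s <= sigma * lam zeta -> mu * f s <= C1 * Rpower s nu) ->
  (forall r, 0 < r <= sigma * lam zeta ->
     Rabs (u r zeta - ub r zeta) <= 2 * X0 / (n - 2) * eta0 eps0 C1 zeta) /\
  Rabs (Derive (fun r => u r zeta) (sigma * lam zeta)
        - Derive (fun r => ub r zeta) (sigma * lam zeta))
    <= Y0 * eta0 eps0 C1 zeta / (sigma * lam zeta).
Proof.
  intros Hz He0 HC1 HKb Hfb.
  set (RR := sigma * lam zeta).
  assert (HR0 : 0 < RR) by (apply Rmult_lt_0_compat; [assumption|apply Rpower_pos]).
  assert (Hzp : 0 < Rpower zeta (p - 1)) by apply Rpower_pos.
  assert (HX : exp (2 * (k0 * p * Rpower zeta (p - 1)) / (n - 2) / (2 + alpha)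
                    * Rpower RR (2 + alpha))
               = X0).
  { unfold X0, RR. f_equal. rewrite scaled_radius_power by assumption. field. repeat split; lra. }
  assert (HL0 : k0 * p * Rpower zeta (p - 1) * (Rpower RR (2 + alpha) / (2 + alpha))
                = k0 * p * (Rpower sigma (2 + alpha) / (2 + alpha))).
  { unfold RR. rewrite scaled_radius_power by assumption. field. repeat split; lra. }
  assert (K_ge0 : forall s, 0 < s -> 0 <= K s) by (intros s Hs; left; apply K_pos, Hs).
  pose proof (comparison_values n p mu k0 alpha nu zeta RR eps0 C1 K f _ _ Hn Hp Halpha Hnu Hk0
                Hz HR0 He0 HC1 Hmu K_cont f_cont K_ge0 f_ge0 HKb Hfb
                (u_sol zeta Hz) (ub_sol zeta Hz))
    as P1.
  pose proof (comparison_masses n p mu k0 alpha nu zeta RR eps0 C1 K f _ _ Hn Hp Halpha Hnu Hk0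
                Hz HR0 He0 HC1 Hmu K_cont f_cont K_ge0 f_ge0 HKb Hfb
                (u_sol zeta Hz) (ub_sol zeta Hz))
    as P2.
  split.
  - intros r Hr. eapply Rle_trans; [apply P1, Hr|].
    rewrite HX. unfold eta0. fold RR. right. field. lra.
  - destruct (integral_solution_flux n p mu zeta K f _ Hn Hp K_cont f_cont (u_sol zeta Hz))
      as [B1 [LB1 DV1]].
    destruct (integral_solution_flux n p 0 zeta _ (fun _ => 0) _ Hn Hp
                (model_weight_continuous k0 alpha) (fun s _ => continuous_const 0 s)
                (ub_sol zeta Hz))
      as [B2 [LB2 DV2]].
    fold RR. rewrite (is_derive_unique _ _ _ (DV1 RR HR0)), (is_derive_unique _ _ _ (DV2 RR HR0)).
    specialize (P2 (B1 RR) (B2 RR) (LB1 RR HR0) (LB2 RR HR0)). rewrite HL0, HX in P2.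
    replace (- Rpower RR (1 - n) * B1 RR - - Rpower RR (1 - n) * B2 RR)
      with (Rpower RR (1 - n) * (B2 RR - B1 RR)) by ring.
    rewrite Rabs_mult, (Rabs_minus_sym (B2 RR)), (Rabs_pos_eq (Rpower RR (1 - n)))
      by (left; apply Rpower_pos).
    eapply Rle_trans; [apply Rmult_le_compat_l; [left; apply Rpower_pos|exact P2]|].
    rewrite <- Rmult_assoc, <- Rpower_plus. replace (1 - n + (n - 2)) with (- (1)) by ring.
    rewrite Rpower_Ropp, Rpower_1 by assumption.
    unfold eta0, Y0. fold RR. right. field. lra.
Qed.

Hypothesis K_asym : filterlim (fun r => K r / Rpower r alpha) (at_right 0) (locally k0).
Hypothesis f_bigO : exists C delta, 0 < delta /\
  forall r, 0 < r < delta -> Rabs (f r) <= C * Rpower r nu.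

Lemma scaled_radius_eventually_lt (d : R) : 0 < d ->
  exists Z, 0 < Z /\ forall zeta, Z < zeta -> sigma * lam zeta < d.
Proof.
  intros Hd. assert (Hth : 0 < theta alpha p) by (unfold theta; apply Rdiv_lt_0_compat; lra).
  destruct (Rpower_eventually_lt (/ theta alpha p) (d / sigma)) as [Z [HZ HZ']];
    [apply Rinv_0_lt_compat, Hth|apply Rdiv_lt_0_compat; assumption|].
  exists Z. split; [assumption|]. intros zeta Hz. specialize (HZ' zeta Hz).
  apply (Rmult_lt_compat_l sigma) in HZ'; [|assumption].
  replace (sigma * (d / sigma)) with d in HZ' by (field; lra). exact HZ'.
Qed.

Lemma forcing_error_eventually_small (C1 rho : R) : 0 <= C1 -> 0 < rho ->
  exists Z, 0 < Z /\ forall zeta, Z < zeta ->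
    C1 * Rpower (sigma * lam zeta) (2 + nu) / (2 + nu) <= rho * zeta.
Proof.
  intros HC1 Hrho.
  assert (Hth : 0 < theta alpha p) by (unfold theta; apply Rdiv_lt_0_compat; lra).
  assert (Hsn : 0 < Rpower sigma (2 + nu)) by apply Rpower_pos.
  set (a := (2 + nu) / theta alpha p + 1).
  assert (Ha : 0 < a) by (unfold a; pose proof (Rdiv_lt_0_compat (2 + nu) _ ltac:(lra) Hth); lra).
  set (c := rho * (2 + nu) / ((C1 + 1) * Rpower sigma (2 + nu))).
  destruct (Rpower_eventually_lt a c) as [Z [HZ HZ']];
    [assumption|apply Rdiv_lt_0_compat; [nra|apply Rmult_lt_0_compat; lra]|].
  exists Z. split; [assumption|]. intros zeta Hz. specialize (HZ' zeta Hz).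
  assert (Hzeta : 0 < zeta) by lra.
  assert (HL : Rpower (sigma * lam zeta) (2 + nu)
               = Rpower sigma (2 + nu) * (Rpower zeta (- a) * zeta)).
  { unfold lam. rewrite <- Rpower_mult_distr by (assumption || apply Rpower_pos). f_equal.
    rewrite Rpower_mult, (Rmult_comm (Rpower zeta (- a))), Rpower_plus_1 by assumption.
    f_equal. unfold a. field. lra. }
  rewrite HL. pose proof (Rpower_pos zeta (- a)).
  apply Rle_trans with (C1 * (Rpower sigma (2 + nu) * (c * zeta)) / (2 + nu)).
  { apply Rmult_le_compat_r; [left; apply Rinv_0_lt_compat; lra|].
    apply Rmult_le_compat_l; [assumption|]. apply Rmult_le_compat_l; [lra|].
    apply Rmult_le_compat_r; lra. }
  replace (C1 * (Rpower sigma (2 + nu) * (c * zeta)) / (2 + nu)) with (C1 / (C1 + 1) * (rho * zeta))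
    by (unfold c; field; repeat split; lra).
  assert (C1 / (C1 + 1) <= 1).
  { apply (Rmult_le_reg_r (C1 + 1)); [lra|]. unfold Rdiv. rewrite Rmult_assoc, Rinv_l; lra. }
  assert (0 < rho * zeta) by nra.
  nra.
Qed.

(** [eps0] is tuned so that the [K]-term of [eta0] is exactly [rho zeta / 2]. *)
Lemma perturbation_eventually_small (rho : R) : 0 < rho ->
  exists eps0 C1 Z, 0 <= eps0 /\ 0 <= C1 /\ 0 < Z /\ forall zeta, Z < zeta ->
    (forall s, 0 < s <= sigma * lam zeta ->
       Rabs (K s - k0 * Rpower s alpha) <= eps0 * Rpower s alpha) /\
    (forall s, 0 < s <= sigma * lam zeta -> mu * f s <= C1 * Rpower s nu) /\
    eta0 eps0 C1 zeta <= rho * zeta.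
Proof.
  intros Hrho.
  assert (Hsa : 0 < Rpower sigma (2 + alpha)) by apply Rpower_pos.
  set (eps0 := rho * (2 + alpha) / (2 * Rpower sigma (2 + alpha))).
  assert (He0 : 0 < eps0) by (unfold eps0; apply Rdiv_lt_0_compat; nra).
  destruct (K_close_near_0 K alpha k0 eps0 He0 K_asym) as [dK [HdK HKb]].
  destruct (forcing_bound_near_0 f mu nu Hmu f_bigO) as [C1 [df [HC1 [Hdf Hfb]]]].
  destruct (scaled_radius_eventually_lt (Rmin dK df)) as [Z1 [HZ1 HZ1']];
    [apply Rmin_glb_lt; assumption|].
  destruct (forcing_error_eventually_small C1 (rho / 2) HC1 ltac:(lra)) as [Z2 [HZ2 HZ2']].
  exists eps0, C1, (Rmax Z1 Z2). split; [lra|]. split; [assumption|].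
  split; [pose proof (Rmax_l Z1 Z2); lra|].
  intros zeta Hz. pose proof (Rmax_l Z1 Z2). pose proof (Rmax_r Z1 Z2).
  specialize (HZ1' zeta ltac:(lra)). specialize (HZ2' zeta ltac:(lra)).
  pose proof (Rmin_l dK df). pose proof (Rmin_r dK df).
  split; [intros s Hs; apply HKb; lra|]. split; [intros s Hs; apply Hfb; lra|].
  assert (Hzeta : 0 < zeta) by lra.
  unfold eta0. rewrite scaled_radius_power by assumption.
  replace (Rpower zeta p) with (zeta * Rpower zeta (p - 1))
    by (replace p with (1 + (p - 1)) at 2 by ring; apply Rpower_plus_1, Hzeta).
  replace (eps0 * (zeta * Rpower zeta (p - 1)) * (Rpower sigma (2 + alpha) * / Rpower zeta (p - 1))
           / (2 + alpha)) with (rho * zeta / 2)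
    by (pose proof (Rpower_pos zeta (p - 1)); unfold eps0; field; repeat split; lra).
  lra.
Qed.

Lemma solutions_close (tau : R) : 0 < tau ->
  exists Z, 0 < Z /\ forall zeta, Z < zeta ->
    (forall r, 0 < r <= sigma * lam zeta -> Rabs (u r zeta - ub r zeta) <= tau * zeta) /\
    Rabs (Derive (fun r => u r zeta) (sigma * lam zeta)
          - Derive (fun r => ub r zeta) (sigma * lam zeta))
      <= tau * Rpower zeta (1 + / theta alpha p).
Proof.
  intros Htau.
  assert (HX0 : 0 < X0) by apply exp_pos.
  assert (HY0 : 0 < Y0).
  { unfold Y0. pose proof (Rpower_pos sigma (2 + alpha)).
    assert (0 < Rpower sigma (2 + alpha) / (2 + alpha)) by (apply Rdiv_lt_0_compat; lra).
    assert (0 < 2 / (n - 2)) by (apply Rdiv_lt_0_compat; lra).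
    assert (0 < k0 * p) by nra.
    assert (0 <= k0 * p * (Rpower sigma (2 + alpha) / (2 + alpha)) * (2 / (n - 2)) * X0)
      by (apply Rmult_le_pos; [apply Rmult_le_pos; [apply Rmult_le_pos|]|]; lra).
    lra. }
  set (rho := Rmin (tau * (n - 2) / (2 * X0)) (tau * sigma / Y0)).
  assert (Hrho : 0 < rho) by (apply Rmin_glb_lt; apply Rdiv_lt_0_compat; nra).
  assert (Hrho1 : rho <= tau * (n - 2) / (2 * X0)) by apply Rmin_l.
  assert (Hrho2 : rho <= tau * sigma / Y0) by apply Rmin_r.
  destruct (perturbation_eventually_small rho Hrho) as [eps0 [C1 [Z [He0 [HC1 [HZ HZ']]]]]].
  exists Z. split; [assumption|]. intros zeta Hz.
  assert (Hzeta : 0 < zeta) by lra.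
  destruct (HZ' zeta Hz) as [HKb [Hfb Heta]].
  destruct (comparison_at_scale zeta eps0 C1 Hzeta He0 HC1 HKb Hfb) as [P1 P2].
  assert (Hlam : 0 < lam zeta) by apply Rpower_pos.
  split.
  - intros r Hr. eapply Rle_trans; [apply P1, Hr|].
    apply Rle_trans with (2 * X0 / (n - 2) * (rho * zeta)).
    { apply Rmult_le_compat_l; [apply Rdiv_le_0_compat; lra|exact Heta]. }
    apply Rle_trans with (2 * X0 / (n - 2) * (tau * (n - 2) / (2 * X0) * zeta)).
    { apply Rmult_le_compat_l; [apply Rdiv_le_0_compat; lra|]. apply Rmult_le_compat_r; lra. }
    right. field. lra.
  - eapply Rle_trans; [exact P2|].
    replace (tau * Rpower zeta (1 + / theta alpha p))
      with (Y0 * (tau * sigma / Y0 * zeta) / (sigma * lam zeta)).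
    2: { unfold lam. rewrite Rpower_Ropp, <- Rpower_plus_1 by assumption.
         pose proof (Rpower_pos zeta (/ theta alpha p)). field. repeat split; lra. }
    unfold Rdiv. apply Rmult_le_compat_r; [left; apply Rinv_0_lt_compat; nra|].
    apply Rmult_le_compat_l; [lra|]. apply Rle_trans with (rho * zeta); [assumption|].
    apply Rmult_le_compat_r; lra.
Qed.

Lemma relative_value_error_lim :
  is_lim (fun zeta => / zeta * Rabs (u (sigma * lam zeta) zeta - ub (sigma * lam zeta) zeta))
         p_infty 0.
Proof.
  apply is_lim_p_infty_0. intros eps He.
  destruct (solutions_close eps He) as [Z [HZ HC]]. exists Z. intros zeta Hz.
  destruct (HC zeta Hz) as [H1 _]. assert (Hzeta : 0 < zeta) by lra.
  assert (Hlam : 0 < lam zeta) by apply Rpower_pos.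
  specialize (H1 (sigma * lam zeta) ltac:(split; [nra|lra])).
  rewrite Rabs_pos_eq by (apply Rmult_le_pos; [left; apply Rinv_0_lt_compat, Hzeta|apply Rabs_pos]).
  apply (Rmult_le_compat_l (/ zeta)) in H1; [|left; apply Rinv_0_lt_compat, Hzeta].
  replace (/ zeta * (eps * zeta)) with eps in H1 by (field; lra). exact H1.
Qed.

Lemma relative_slope_error_lim :
  is_lim (fun zeta => Rpower zeta (-1 - / theta alpha p) *
            Rabs (Derive (fun r => u r zeta) (sigma * lam zeta)
                  - Derive (fun r => ub r zeta) (sigma * lam zeta))) p_infty 0.
Proof.
  apply is_lim_p_infty_0. intros eps He.
  destruct (solutions_close eps He) as [Z [HZ HC]]. exists Z. intros zeta Hz.
  destruct (HC zeta Hz) as [_ H2]. assert (Hzeta : 0 < zeta) by lra.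
  rewrite Rabs_pos_eq by (apply Rmult_le_pos; [left; apply Rpower_pos|apply Rabs_pos]).
  apply (Rmult_le_compat_l (Rpower zeta (-1 - / theta alpha p))) in H2; [|left; apply Rpower_pos].
  replace (Rpower zeta (-1 - / theta alpha p) * (eps * Rpower zeta (1 + / theta alpha p))) with eps
    in H2; [exact H2|].
  rewrite Rmult_comm, Rmult_assoc, <- Rpower_plus.
  replace (1 + / theta alpha p + (-1 - / theta alpha p)) with 0 by ring.
  rewrite Rpower_O by assumption. ring.
Qed.

Hypothesis Hcrit : n + 2 + 2 * alpha < (n - 2) * p.

Lemma model_solution_rescale (zeta t : R) : 0 < zeta -> 0 < t ->
  ub (lam zeta * t) zeta = zeta * ub t 1.
Proof.
  intros Hz Ht.
  assert (W := model_solution_scale n p k0 alpha Hn Hp Halpha zeta _ Hz (ub_sol zeta Hz)).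
  rewrite <- (model_solution_unique n p k0 alpha Hn Hp Halpha Hk0 1 _ _ Rlt_0_1 W
                (ub_sol 1 Rlt_0_1) t Ht).
  fold (lam zeta). field. lra.
Qed.

(** [ub(., zeta) >= zeta * ub(sigma, 1) > 0] on [(0, sigma lam]] by scaling and monotonicity,
    and [u] stays within [zeta * ub(sigma, 1) / 2] of it there. *)
Lemma first_zero_lower_bound :
  exists zs, 0 < zs /\ forall zeta, zs < zeta ->
    Rbar_le (Finite (sigma * lam zeta)) (first_zero (fun r => u r zeta)).
Proof.
  set (m := ub sigma 1).
  assert (Hm : 0 < m)
    by exact (model_solution_pos n p k0 alpha Hn Hp Halpha Hk0 (fun t => ub t 1) Hcrit
                (ub_sol 1 Rlt_0_1) sigma Hsigma).
  destruct (solutions_close (m / 2) ltac:(lra)) as [Z [HZ HC]].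
  exists Z. split; [assumption|]. intros zeta Hz. destruct (HC zeta Hz) as [H1 _].
  assert (Hzeta : 0 < zeta) by lra. assert (Hlam : 0 < lam zeta) by apply Rpower_pos.
  unfold first_zero. destruct (Glb_Rbar_correct (fun r => 0 < r /\ u r zeta = 0)) as [_ Hglb].
  apply Hglb. intros x [Hx0 Hux]. simpl.
  destruct (Rle_or_lt (sigma * lam zeta) x) as [|Hx]; [assumption|exfalso].
  specialize (H1 x ltac:(lra)). rewrite Hux in H1.
  assert (Hub : ub x zeta = zeta * ub (x / lam zeta) 1).
  { rewrite <- model_solution_rescale by (try apply Rdiv_lt_0_compat; lra). f_equal. field. lra. }
  assert (m <= ub (x / lam zeta) 1).
  { apply (integral_solution_nonincreasing n p 0 1 _ (fun _ => 0) (fun t => ub t 1) Hn Hp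
             (model_weight_continuous k0 alpha) (fun s _ => continuous_const 0 s) (ub_sol 1 Rlt_0_1)
             (fun s Hs => model_source_ge0 p k0 alpha (fun t => ub t 1) s Hk0 Hs)).
    - apply Rdiv_lt_0_compat; lra.
    - apply (Rmult_le_reg_r (lam zeta)); [assumption|]. unfold Rdiv.
      rewrite Rmult_assoc, Rinv_l; lra. }
  apply Rabs_le_between in H1. nra.
Qed.

End Asymptotics.

Theorem lemma3p5
  (N : nat) (mu alpha k0 nu p : R) (K f : R -> R)
  (u ubar : R -> R -> R)
  (HN : (3 <= N)%nat)
  (Hmu : 0 <= mu)
  (* (K0) *)
  (Halpha : -2 < alpha) (Hk0 : 0 < k0)
  (HKcont : forall r, 0 < r -> continuous K r)
  (HKpos : forall r, 0 < r -> 0 < K r)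
  (HKasym : filterlim (fun r => K r / Rpower r alpha) (at_right 0) (locally k0))
  (* (F0) *)
  (Hnu : -2 < nu)
  (Hfcont : forall r, 0 < r -> continuous f r)
  (Hfnn : forall r, 0 < r -> 0 <= f r)
  (Hfnz : exists r, 0 < r /\ f r <> 0)
  (HfO : exists C delta, 0 < delta /\
           forall r, 0 < r < delta -> Rabs (f r) <= C * Rpower r nu)
  (Hp : pS N alpha < p)
  (* u(.,zeta) : regular solution of the perturbed problem *)
  (Hu : forall zeta, 0 < zeta -> regular_solution N p mu K f zeta (fun r => u r zeta))
  (* ubar(.,zeta) : regular solution of ubar'' + (N-1)/r ubar' + k0 r^alpha ubar^p = 0 *)
  (Hubar : forall zeta, 0 < zeta ->
     regular_solution N p 0 (fun r => k0 * Rpower r alpha) (fun _ => 0) zeta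
       (fun r => ubar r zeta)) :
  (forall sigma, 0 < sigma ->
     exists zs, 0 < zs /\ forall zeta, zs < zeta ->
       Rbar_le (Finite (sigma * Rpower zeta (- / theta alpha p)))
               (first_zero (fun r => u r zeta)))
  /\
  (forall sigma, 0 < sigma ->
     is_lim (fun zeta =>
               / zeta * Rabs (u (sigma * Rpower zeta (- / theta alpha p)) zeta
                              - ubar (sigma * Rpower zeta (- / theta alpha p)) zeta))
            p_infty 0)
  /\
  (forall sigma, 0 < sigma ->
     is_lim (fun zeta =>
               Rpower zeta (-1 - / theta alpha p) *
               Rabs (Derive (fun r => u r zeta) (sigma * Rpower zeta (- / theta alpha p))
                     - Derive (fun r => ubar r zeta) (sigma * Rpower zeta (- / theta alpha p))))
            p_infty 0).
Proof.
  assert (Hn : 2 < INR N) by (apply le_INR in HN; simpl in HN; lra).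
  assert (Hcrit : INR N + 2 + 2 * alpha < (INR N - 2) * p).
  { unfold pS in Hp. apply (Rmult_lt_compat_r (INR N - 2)) in Hp; [|lra].
    unfold Rdiv in Hp. rewrite Rmult_assoc, Rinv_l, Rmult_1_r in Hp; lra. }
  assert (Hp1 : 1 < p) by nra.
  assert (Wu := fun zeta Hz => regular_solution_integral_solution _ _ _ _ _ _ _ (Hu zeta Hz)).
  assert (Wub := fun zeta Hz => regular_solution_integral_solution _ _ _ _ _ _ _ (Hubar zeta Hz)).
  split; [|split]; intros sigma Hs.
  - exact (first_zero_lower_bound _ _ _ _ _ _ _ _ _ _ ubar Hn Hp1 Hmu Halpha Hk0 Hnu Hs
             HKcont HKpos Hfcont Hfnn Wu Wub HKasym HfO Hcrit).
  - exact (relative_value_error_lim _ _ _ _ _ _ _ _ _ _ ubar Hn Hp1 Hmu Halpha Hk0 Hnu Hs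
             HKcont HKpos Hfcont Hfnn Wu Wub HKasym HfO).
  - exact (relative_slope_error_lim _ _ _ _ _ _ _ _ _ _ ubar Hn Hp1 Hmu Halpha Hk0 Hnu Hs
             HKcont HKpos Hfcont Hfnn Wu Wub HKasym HfO).
Qed.
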